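(* Let $\gamma>1$, $0<\alpha<\frac12$. (a) If $\bar\rho>0$ and $(\rho,u)$ is a smooth solution as in Lemma 3.1 on $\mathbb R\times[0,T]$ (with $\rho>0$, $\rho\to\bar\rho$ at infinity), then there exist constants $0<\tilde C\le C$, depending only on $\alpha,\gamma,\bar\rho$ and on the initial quantity $E_0=\int_{\mathbb R}\{\rho|u|^2+[(\rho^{\alpha-1/2})_x]^2+\rho\Psi(\rho,\bar\rho)\}(x,0)dx$, such that $\tilde C\le\rho(x,t)\le C$ on $\mathbb R\times[0,T]$. (b) If $\bar\rho=0$, $M>0$, and $(\rho,u)$ is a smooth solution on $[-M,M]\times[0,T]$ of $\rho_t+(\rho u)_x=0$, $(\rho u)_t+(\rho u^2+\rho^\gamma)_x=(\rho^\alpha u_x)_x$ with $\rho>0$ and boundary condition $u(\pm M,t)=0$, then $C(M)\le\rho(x,t)\le C$ on $[-M,M]\times[0,T]$, where $C$ depends only on $\alpha,\gamma$ and the initial quantities $\int_{-M}^M\{\rho|u|^2+[(\rho^{\alpha-1/2})_x]^2+\rho^\gamma\}(x,0)dx$, $\int_{-M}^M\rho(x,0)dx$, and $C(M)>0$ depends additionally on $M$.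
   Context: $\Psi(\rho,\bar\rho)=\int_{\bar\rho}^{\rho}\frac{s^\gamma-\bar\rho^\gamma}{s^2}ds$, so that $\rho\Psi(\rho,\bar\rho)=\frac{1}{\gamma-1}[\rho^\gamma-\bar\rho^\gamma-\gamma\bar\rho^{\gamma-1}(\rho-\bar\rho)]$. Lemma 3.1 asserts the uniform-in-time energy/entropy bound $\sup_t\int\{\rho u^2+[(\rho^{\alpha-1/2}/(\alpha-1/2))_x]^2+\rho\Psi(\rho,\bar\rho)\}dx+\int_0^T\int\{\rho^\alpha u_x^2+[(\rho^{(\alpha+\gamma-1)/2}-\bar\rho^{(\alpha+\gamma-1)/2})_x]^2\}\le C$ for smooth positive solutions with sufficient decay (or with $u=0$ at the boundary of a bounded interval). *)

From Stdlib Require Import Reals Lra.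
Open Scope R_scope.

Definition Dstrip (T : R) (x t : R) : Prop := 0 <= t <= T.
Definition Drect (M T : R) (x t : R) : Prop := -M <= x <= M /\ 0 <= t <= T.

(* Partial derivatives within a domain D (one-sided at the boundary). *)
Definition pdx (D : R -> R -> Prop) (f : R -> R -> R) (x t l : R) : Prop :=
  limit1_in (fun h => (f (x + h) t - f x t) / h)
            (fun h => h <> 0 /\ D (x + h) t) l 0.
Definition pdt (D : R -> R -> Prop) (f : R -> R -> R) (x t l : R) : Prop :=
  limit1_in (fun h => (f x (t + h) - f x t) / h)
            (fun h => h <> 0 /\ D x (t + h)) l 0.

Definition cont_on (D : R -> R -> Prop) (f : R -> R -> R) : Prop :=
  forall x t, D x t -> forall eps, 0 < eps -> exists del, 0 < del /\
    forall y s, D y s -> Rabs (y - x) < del -> Rabs (s - t) < del ->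
      Rabs (f y s - f x t) < eps.

(* C^infinity on D: all iterated partial derivatives exist, are jointly
   continuous, and each satisfies the side property P. *)
CoInductive smooth_on (D : R -> R -> Prop) (P : (R -> R -> R) -> Prop)
  (f : R -> R -> R) : Prop :=
| smooth_on_intro (fx ft : R -> R -> R) :
    P f -> cont_on D f ->
    (forall x t, D x t -> pdx D f x t (fx x t)) ->
    (forall x t, D x t -> pdt D f x t (ft x t)) ->
    smooth_on D P fx -> smooth_on D P ft -> smooth_on D P f.

Definition noP (f : R -> R -> R) : Prop := True.

Definition decay0 (T : R) (f : R -> R -> R) : Prop :=
  forall eps, 0 < eps -> exists Rr, forall x t, 0 <= t <= T -> Rr < Rabs x ->
    Rabs (f x t) < eps.

Definition is_solution (D : R -> R -> Prop) (gamma alpha : R)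
  (rho u : R -> R -> R) : Prop :=
  (forall x t, D x t -> 0 < rho x t) /\
  (forall x t, D x t -> exists a b,
      pdt D rho x t a /\ pdx D (fun y s => rho y s * u y s) x t b /\ a + b = 0) /\
  exists ux : R -> R -> R,
    (forall x t, D x t -> pdx D u x t (ux x t)) /\
    (forall x t, D x t -> exists a b c,
      pdt D (fun y s => rho y s * u y s) x t a /\
      pdx D (fun y s => rho y s * (u y s)^2 + Rpower (rho y s) gamma) x t b /\
      pdx D (fun y s => Rpower (rho y s) alpha * ux y s) x t c /\
      a + b = c).

Definition rhoPsi (gamma rhobar r : R) : R :=
  / (gamma - 1) * (Rpower r gamma - Rpower rhobar gamma
                   - gamma * Rpower rhobar (gamma - 1) * (r - rhobar)).

Definition has_int_R (f : R -> R) (L : R) : Prop :=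
  (forall a b, inhabited (Riemann_integrable f a b)) /\
  forall eps, 0 < eps -> exists Rr, forall a b (pr : Riemann_integrable f a b),
    a < - Rr -> Rr < b -> Rabs (RiemannInt pr - L) < eps.

Definition has_int (f : R -> R) (a b L : R) : Prop :=
  exists pr : Riemann_integrable f a b, RiemannInt pr = L.

(* For a classical solution we establish two
   integral estimates, uniform in time:
   - the energy inequality  d/dt ∫ rho u^2/2 + G(rho) <= - ∫ rho^alpha u_x^2 <= 0,
     with G the pressure potential ((rho Psi)(rho, rhobar) resp. rho^gamma/(gamma-1));
   - the BD entropy inequality  d/dt ∫ rho (u + w)^2/2 + G(rho) <= 0, where
     w = rho^(alpha-2) rho_x.
   Together they bound ∫ (z_x)^2 for z = rho^(alpha - 1/2), hence (Cauchy-Schwarz)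
   z is Hölder-1/2 in x:  (z(y) - z(x))^2 <= |y - x| B2.  Since alpha < 1/2,
   z = rho^(-beta) with beta = 1/2 - alpha > 0, so on a short interval around a
   point rho is comparable to its value there.  Comparing with the bound
   ∫ G(rho) <= B1 then rules out very large and (when rhobar > 0, through
   G(0+) > 0; when rhobar = 0, through mass conservation) very small values. *)

From Stdlib Require Import Reals Lra.
From Coquelicot Require Import Coquelicot.
Open Scope R_scope.

(* Projection of R onto [a, b]; composing with it turns "continuous on [a,b]"
   into "continuous everywhere", which is what Coquelicot's lemmas expect. *)
Definition clamp (a b x : R) := Rmax a (Rmin b x).

Lemma clamp_in a b x : a <= b -> a <= clamp a b x <= b.
Proof. intros; unfold clamp, Rmax, Rmin; repeat destruct Rle_dec; lra. Qed.

Lemma clamp_id a b x : a <= x <= b -> clamp a b x = x.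
Proof. intros; unfold clamp, Rmax, Rmin; repeat destruct Rle_dec; lra. Qed.

Lemma clamp_lip a b x y : a <= b -> Rabs (clamp a b y - clamp a b x) <= Rabs (y - x).
Proof.
  intros; unfold clamp, Rmax, Rmin; repeat destruct Rle_dec;
  unfold Rabs; repeat destruct Rcase_abs; lra.
Qed.

Definition cont_ab a b (f : R -> R) := forall y, continuity_pt (fun y => f (clamp a b y)) y.

Lemma c2d_section_x f x t : continuity_2d_pt f x t -> continuity_pt (fun y => f y t) x.
Proof.
  intros H eps Heps. destruct (H (mkposreal _ Heps)) as [d Hd].
  exists d. split; [apply cond_pos|]. intros y [_ Hy]. simpl in *. unfold Rdist in *.
  apply Hd; [exact Hy| rewrite Rminus_eq_0, Rabs_R0; apply cond_pos].
Qed.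

Lemma c2d_cont_ab f a b T t : 0 <= T -> 0 <= t <= T ->
  (forall x t, continuity_2d_pt (fun x t => f (clamp a b x) (clamp 0 T t)) x t) ->
  cont_ab a b (fun x => f x t).
Proof.
  intros HT Ht H y. pose proof (c2d_section_x _ y t (H y t)) as Hc. simpl in Hc.
  rewrite (clamp_id 0 T t Ht) in Hc. exact Hc.
Qed.

Lemma cont_ab_sub a b x y f : a <= x -> x <= y -> y <= b -> cont_ab a b f -> cont_ab x y f.
Proof.
  intros H1 H2 H3 Hc s.
  apply continuity_pt_ext with (fun s => (fun z => f (clamp a b z)) (clamp x y s)).
  { intros z. cbv beta. f_equal. apply clamp_id. assert (Hc' := clamp_in x y z H2). lra. }
  apply (continuity_pt_comp (clamp x y) (fun z => f (clamp a b z))).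
  - intros eps Heps. exists eps. split; [lra|]. intros w [_ Hw]. simpl in *. unfold Rdist in *.
    eapply Rle_lt_trans; [apply clamp_lip; lra| exact Hw].
  - apply Hc.
Qed.

Lemma cont_ab_ex_RInt_sub a b c d f : a <= c <= d -> d <= b -> cont_ab a b f -> ex_RInt f c d.
Proof.
  intros H1 H2 Hc.
  apply ex_RInt_ext with (f := fun y => f (clamp a b y)).
  { intros x Hx. rewrite Rmin_left in Hx by lra. rewrite Rmax_right in Hx by lra.
    rewrite clamp_id; [reflexivity| lra]. }
  apply (@ex_RInt_continuous R_CompleteNormedModule). intros z _. apply continuity_pt_filterlim. apply Hc.
Qed.

Lemma cont_ab_ex_RInt a b f : a <= b -> cont_ab a b f -> ex_RInt f a b.
Proof. intros; eapply cont_ab_ex_RInt_sub; eauto; lra. Qed.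

Lemma extrema_interval (f : R -> R) a b : a <= b -> cont_ab a b f ->
  (exists mn, a <= mn <= b /\ forall c, a <= c <= b -> f mn <= f c) /\
  (exists mx, a <= mx <= b /\ forall c, a <= c <= b -> f c <= f mx).
Proof.
  intros Hab Hc. split.
  - destruct (continuity_ab_min (fun y => f (clamp a b y)) a b Hab) as [mn [H1 H2]].
    { intros; apply Hc. }
    exists mn. split; auto. intros c Hc'. specialize (H1 c Hc').
    rewrite !clamp_id in H1 by lra. exact H1.
  - destruct (continuity_ab_maj (fun y => f (clamp a b y)) a b Hab) as [mx [H1 H2]].
    { intros; apply Hc. }
    exists mx. split; auto. intros c Hc'. specialize (H1 c Hc').
    rewrite !clamp_id in H1 by lra. exact H1.
Qed.

Lemma derivable_local f g x l :
  (exists d, 0 < d /\ forall z, Rabs (z - x) < d -> g z = f z) ->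
  derivable_pt_lim f x l -> derivable_pt_lim g x l.
Proof.
  intros [d [Hd Hfg]] H eps Heps. destruct (H eps Heps) as [del Hdel].
  assert (Hm : 0 < Rmin del d) by (apply Rmin_pos; [apply cond_pos| lra]).
  exists (mkposreal _ Hm). intros h Hh Hha. simpl in Hha.
  assert (Hm1 := Rmin_l del d). assert (Hm2 := Rmin_r del d).
  rewrite !Hfg.
  - apply Hdel; [exact Hh| lra].
  - rewrite Rminus_eq_0, Rabs_R0; lra.
  - replace (x + h - x) with h by ring. lra.
Qed.

Lemma derivable_clamped a b f x l : a < x < b -> derivable_pt_lim f x l ->
  derivable_pt_lim (fun y => f (clamp a b y)) x l.
Proof.
  intros Hx H. apply derivable_local with f; auto.
  exists (Rmin (x - a) (b - x)). split; [apply Rmin_pos; lra|].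
  intros z Hz. assert (H1 := Rmin_l (x - a) (b - x)). assert (H2 := Rmin_r (x - a) (b - x)).
  rewrite clamp_id; [reflexivity|]. revert Hz; unfold Rabs; destruct Rcase_abs; lra.
Qed.

Lemma ftc_interval a b f f' : a <= b -> cont_ab a b f -> cont_ab a b f' ->
  (forall y, a < y < b -> derivable_pt_lim f y (f' y)) ->
  RInt f' a b = f b - f a.
Proof.
  intros Hab Hf Hf' Hd.
  set (g := fun y => f' (clamp a b y)).
  assert (Hg : forall y, continuous g y) by (intros; apply continuity_pt_filterlim, Hf').
  assert (HI : forall y, is_derive (fun z => RInt g a z) y (g y)).
  { intros y. apply is_derive_RInt with (a := a).
    - apply filter_forall. intros b0. apply RInt_correct.
      apply (@ex_RInt_continuous R_CompleteNormedModule). intros; apply Hg.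
    - apply Hg. }
  set (Phi := fun y => f (clamp a b y) - RInt g a (clamp a b y)).
  destruct (MVT_gen Phi a b (fun _ => 0)) as [c [_ Hc]].
  - rewrite Rmin_left, Rmax_right by lra. intros x Hx.
    apply is_derive_Reals.
    replace 0 with (f' x - g x) by (unfold g; rewrite clamp_id; lra).
    apply derivable_pt_lim_minus.
    + apply derivable_clamped; auto.
    + apply derivable_clamped; auto. apply is_derive_Reals. apply HI.
  - intros x _. unfold Phi. apply continuity_pt_minus; [apply Hf|].
    apply (continuity_pt_comp (clamp a b) (fun z => RInt g a z)).
    + intros eps Heps. exists eps. split; [lra|]. intros y [_ Hy].
      simpl in *. unfold Rdist in *. eapply Rle_lt_trans; [apply clamp_lip; lra| exact Hy].
    + apply continuity_pt_filterlim. apply (@ex_derive_continuous R_AbsRing R_NormedModule). eexists; apply HI.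
  - unfold Phi in Hc. rewrite !clamp_id in Hc by lra.
    rewrite RInt_point in Hc. unfold zero in Hc; simpl in Hc.
    rewrite (RInt_ext f' g). lra.
    intros x Hx. rewrite Rmin_left, Rmax_right in Hx by lra. unfold g. rewrite clamp_id; lra.
Qed.

Lemma mvt_interior f f' a b : a < b -> (forall c, a <= c <= b -> continuity_pt f c) ->
  (forall c, a < c < b -> derivable_pt_lim f c (f' c)) ->
  exists c, a < c < b /\ f b - f a = f' c * (b - a).
Proof.
  intros Hab Hc Hd.
  assert (pr1 : forall c, a < c < b -> derivable_pt f c).
  { intros c Hc'. exists (f' c). apply Hd; auto. }
  assert (pr2 : forall c, a < c < b -> derivable_pt id c) by (intros; apply derivable_pt_id).
  destruct (MVT f id a b pr1 pr2 Hab Hc) as [c [P HP]].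
  { intros; apply derivable_continuous_pt, derivable_pt_id. }
  exists c. split; auto.
  rewrite (derive_pt_eq_0 f c (f' c) (pr1 c P) (Hd c P)) in HP.
  rewrite (derive_pt_eq_0 id c 1 (pr2 c P)) in HP.
  - unfold id in HP. lra.
  - apply derivable_pt_lim_id.
Qed.

Lemma RInt_ge_const f a b m : a <= b -> ex_RInt f a b ->
  (forall x, a < x < b -> m <= f x) -> m * (b - a) <= RInt f a b.
Proof.
  intros Hab He H.
  replace (m * (b - a)) with (RInt (fun _ => m) a b).
  - apply RInt_le; auto. apply (@ex_RInt_const R_NormedModule).
  - rewrite RInt_const. unfold scal; simpl; unfold mult; simpl. ring.
Qed.

Lemma RInt_le_bound f a b m : a <= b -> ex_RInt f a b ->
  (forall x, a < x < b -> f x <= m) -> RInt f a b <= m * (b - a).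
Proof.
  intros Hab He H.
  replace (m * (b - a)) with (RInt (fun _ => m) a b).
  - apply RInt_le; auto. apply (@ex_RInt_const R_NormedModule).
  - rewrite RInt_const. unfold scal; simpl; unfold mult; simpl. ring.
Qed.

Lemma RInt_ge0 f a b : a <= b -> ex_RInt f a b ->
  (forall x, a < x < b -> 0 <= f x) -> 0 <= RInt f a b.
Proof. intros. replace 0 with (0 * (b - a)) by ring. apply RInt_ge_const; auto. Qed.

Lemma RInt_subinterval_le f a b c d : a <= c -> c <= d -> d <= b -> ex_RInt f a b ->
  (forall x, a < x < b -> 0 <= f x) -> RInt f c d <= RInt f a b.
Proof.
  intros H1 H2 H3 He Hp.
  assert (Hac : ex_RInt f a c) by (apply (@ex_RInt_Chasles_1 R_CompleteNormedModule) with b; lra || auto).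
  assert (Hcb : ex_RInt f c b) by (apply (@ex_RInt_Chasles_2 R_CompleteNormedModule) with a; lra || auto).
  assert (Hcd : ex_RInt f c d) by (apply (@ex_RInt_Chasles_1 R_CompleteNormedModule) with b; lra || auto).
  assert (Hdb : ex_RInt f d b) by (apply (@ex_RInt_Chasles_2 R_CompleteNormedModule) with c; lra || auto).
  rewrite <- (@RInt_Chasles R_CompleteNormedModule f a c b) by auto.
  rewrite <- (@RInt_Chasles R_CompleteNormedModule f c d b) by auto.
  unfold plus; simpl.
  assert (0 <= RInt f a c) by (apply RInt_ge0; auto; intros; apply Hp; lra).
  assert (0 <= RInt f d b) by (apply RInt_ge0; auto; intros; apply Hp; lra).
  lra.
Qed.

(* Cauchy-Schwarz: (∫ f)^2 <= (b - a) ∫ f^2; proved by expanding ∫ (f - mean)^2 >= 0. *)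
Lemma RInt_cauchy_schwarz f a b : a <= b -> ex_RInt f a b -> ex_RInt (fun x => (f x)^2) a b ->
  (RInt f a b)^2 <= (b - a) * RInt (fun x => (f x)^2) a b.
Proof.
  intros Hab H1 H2.
  destruct (Req_dec a b) as [<-|Hne].
  { rewrite !RInt_point. unfold zero; simpl. lra. }
  set (I1 := RInt f a b). set (I2 := RInt (fun x => (f x)^2) a b).
  set (m := I1 / (b - a)).
  assert (Hpos : 0 <= RInt (fun x => (f x - m)^2) a b).
  { apply RInt_ge0; auto.
    - apply ex_RInt_ext with (fun x => plus (plus ((f x)^2) (scal (-2*m) (f x))) (m^2)).
      + intros; unfold plus, scal; simpl; unfold mult; simpl; ring.
      + apply (@ex_RInt_plus R_NormedModule); [apply (@ex_RInt_plus R_NormedModule); auto; apply (@ex_RInt_scal R_NormedModule); auto| apply (@ex_RInt_const R_NormedModule)].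
    - intros; apply pow2_ge_0. }
  rewrite (RInt_ext _ (fun x => plus (plus ((f x)^2) (scal (-2*m) (f x))) (m^2))) in Hpos.
  2: { intros; unfold plus, scal; simpl; unfold mult; simpl; ring. }
  rewrite (@RInt_plus R_CompleteNormedModule) in Hpos.
  2: { apply (@ex_RInt_plus R_NormedModule); auto; apply (@ex_RInt_scal R_NormedModule); auto. }
  2: { apply (@ex_RInt_const R_NormedModule). }
  rewrite (@RInt_plus R_CompleteNormedModule) in Hpos; auto.
  2: { apply (@ex_RInt_scal R_NormedModule); auto. }
  rewrite (@RInt_scal R_CompleteNormedModule) in Hpos; auto. rewrite RInt_const in Hpos.
  unfold plus, scal in Hpos; simpl in Hpos; unfold mult in Hpos; simpl in Hpos.
  replace (RInt (fun x : R => f x * (f x * 1)) a b) with I2 in Hpos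
    by (unfold I2; apply RInt_ext; intros; simpl; ring).
  assert (Hl : 0 < b - a) by lra.
  fold I1 in Hpos. unfold m in Hpos.
  replace (I2 + -2 * (I1 / (b - a)) * I1 + (b - a) * (I1 / (b - a) * (I1 / (b - a) * 1)))
    with (((b - a) * I2 - I1 ^ 2) / (b - a)) in Hpos by (field; lra).
  assert (H0 : ((b - a) * I2 - I1 ^ 2) = (b-a) * (((b - a) * I2 - I1 ^ 2) / (b - a))) by (field; lra).
  assert (0 <= (b-a) * (((b - a) * I2 - I1 ^ 2) / (b - a))) by (apply Rmult_le_pos; lra).
  lra.
Qed.


Lemma ex_RInt_of_lt (f : R -> R) : (forall a b, a < b -> ex_RInt f a b) -> forall a b, a <= b -> ex_RInt f a b.
Proof.
  intros H a b Hab. destruct (Req_dec a b) as [<-|]; [apply (@ex_RInt_point R_NormedModule)| apply H; lra].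
Qed.

Lemma le_epsilon x y : (forall eps, 0 < eps -> x <= y + eps) -> x <= y.
Proof.
  intros H. destruct (Rle_dec x y); auto. exfalso.
  specialize (H ((x - y) / 2) ltac:(lra)). lra.
Qed.

Lemma has_int_R_bound f E0 a b : has_int_R f E0 -> a <= b -> (forall x, 0 <= f x) ->
  ex_RInt f a b /\ RInt f a b <= E0.
Proof.
  intros [Hi Hl] Hab Hp.
  assert (Hex : forall a b, ex_RInt f a b).
  { intros a' b'. destruct (Hi a' b') as [pr]. apply ex_RInt_Reals_1; exact pr. }
  split; [auto|]. apply le_epsilon. intros eps Heps.
  destruct (Hl eps Heps) as [Rr HR].
  set (a' := Rmin a (- Rr - 1)). set (b' := Rmax b (Rr + 1)).
  assert (H1 : a' <= a) by apply Rmin_l. assert (H2 : b <= b') by apply Rmax_l.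
  assert (H3 : a' <= - Rr - 1) by apply Rmin_r. assert (H4 : Rr + 1 <= b') by apply Rmax_r.
  destruct (Hi a' b') as [pr].
  specialize (HR a' b' pr ltac:(lra) ltac:(lra)).
  rewrite <- RInt_Reals in HR.
  assert (RInt f a b <= RInt f a' b') by (apply RInt_subinterval_le; auto; lra).
  revert HR; unfold Rabs; destruct Rcase_abs; lra.
Qed.

Lemma RInt_mean_bound (G E : R -> R) c d m K : c <= d -> ex_RInt G c d -> ex_RInt E c d ->
  (forall y, c < y < d -> G y <= E y) -> RInt E c d <= K ->
  (forall y, c < y < d -> m <= G y) -> m * (d - c) <= K.
Proof.
  intros Hcd HexG HexE HGE HE Hm.
  apply Rle_trans with (RInt G c d); [apply RInt_ge_const; auto|].
  apply Rle_trans with (RInt E c d); [apply RInt_le; auto| exact HE].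
Qed.

Lemma dpl_eq f x l l' : derivable_pt_lim f x l -> l = l' -> derivable_pt_lim f x l'.
Proof. intros H ->; exact H. Qed.

Lemma dpl_plus (A B : R -> R) x la lb : derivable_pt_lim A x la -> derivable_pt_lim B x lb ->
  derivable_pt_lim (fun y => A y + B y) x (la + lb).
Proof. intros; apply (derivable_pt_lim_plus A B); auto. Qed.
Lemma dpl_minus (A B : R -> R) x la lb : derivable_pt_lim A x la -> derivable_pt_lim B x lb ->
  derivable_pt_lim (fun y => A y - B y) x (la - lb).
Proof. intros; apply (derivable_pt_lim_minus A B); auto. Qed.
Lemma dpl_mult (A B : R -> R) x la lb : derivable_pt_lim A x la -> derivable_pt_lim B x lb ->
  derivable_pt_lim (fun y => A y * B y) x (la * B x + A x * lb).
Proof. intros; apply (derivable_pt_lim_mult A B); auto. Qed.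
Lemma dpl_opp (A : R -> R) x la : derivable_pt_lim A x la ->
  derivable_pt_lim (fun y => - A y) x (- la).
Proof. intros; apply (derivable_pt_lim_opp A); auto. Qed.
Lemma dpl_const (c x : R) : derivable_pt_lim (fun _ => c) x 0.
Proof. apply derivable_pt_lim_const. Qed.
Lemma dpl_divc (A : R -> R) c x la : derivable_pt_lim A x la ->
  derivable_pt_lim (fun y => A y / c) x (la / c).
Proof.
  intros H. apply dpl_eq with (la * / c + A x * 0).
  - apply (dpl_mult A (fun _ => / c)); auto. apply dpl_const.
  - unfold Rdiv. ring.
Qed.
Lemma dpl_pow (A : R -> R) n x la : derivable_pt_lim A x la ->
  derivable_pt_lim (fun y => A y ^ n) x (INR n * A x ^ (pred n) * la).
Proof.
  intros H. apply (derivable_pt_lim_comp A (fun y => y ^ n)); auto.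
  apply derivable_pt_lim_pow.
Qed.
Lemma dpl_Rpower (A : R -> R) e x la : 0 < A x -> derivable_pt_lim A x la ->
  derivable_pt_lim (fun y => Rpower (A y) e) x (e * Rpower (A x) (e - 1) * la).
Proof.
  intros Hp H. apply dpl_eq with ((e * Rpower (A x) (e - 1)) * la); [|ring].
  apply (derivable_pt_lim_comp A (fun y => Rpower y e)); auto.
  apply derivable_pt_lim_power; auto.
Qed.

(* Proves [derivable_pt_lim F x ?l] for F built from +, -, *, /c, ^n, Rpower,
   using hypotheses for the leaves; the value is then fixed up by [dpl_eq]. *)
Ltac solve_derive :=
  lazymatch goal with
  | |- derivable_pt_lim (fun _ => ?c) _ _ => apply dpl_const
  | |- derivable_pt_lim (fun y => @?A y + @?B y) _ _ => apply (dpl_plus A B); solve_derive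
  | |- derivable_pt_lim (fun y => @?A y - @?B y) _ _ => apply (dpl_minus A B); solve_derive
  | |- derivable_pt_lim (fun y => @?A y * @?B y) _ _ => apply (dpl_mult A B); solve_derive
  | |- derivable_pt_lim (fun y => - @?A y) _ _ => apply (dpl_opp A); solve_derive
  | |- derivable_pt_lim (fun y => @?A y / ?c) _ _ => apply (dpl_divc A c); solve_derive
  | |- derivable_pt_lim (fun y => @?A y ^ ?n) _ _ => apply (dpl_pow A n); solve_derive
  | |- derivable_pt_lim (fun y => Rpower (@?A y) ?e) _ _ =>
      apply (dpl_Rpower A e); [cbv beta; solve [auto] | solve_derive]
  | |- derivable_pt_lim ?f ?x _ => first [eassumption | fail 2 "leaf" f]
  end.

Lemma rp_cont e y : 0 < y -> continuity_pt (fun z => Rpower z e) y.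
Proof.
  intros Hy. apply derivable_continuous_pt. exists (e * Rpower y (e - 1)).
  apply derivable_pt_lim_power; auto.
Qed.

Lemma pow_cont n y : continuity_pt (fun z => z ^ n) y.
Proof. apply derivable_continuous_pt. exists (INR n * y ^ pred n). apply derivable_pt_lim_pow. Qed.

Lemma c2d_divc (A : R -> R -> R) c x t : continuity_2d_pt A x t ->
  continuity_2d_pt (fun u v => A u v / c) x t.
Proof.
  intros H. unfold Rdiv. apply (continuity_2d_pt_mult A (fun _ _ => / c)); auto.
  apply continuity_2d_pt_const.
Qed.

Ltac solve_cont2d :=
  lazymatch goal with
  | |- continuity_2d_pt (fun _ _ => ?c) _ _ => apply continuity_2d_pt_const
  | |- continuity_2d_pt (fun u v => @?A u v + @?B u v) _ _ => apply (continuity_2d_pt_plus A B); solve_cont2d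
  | |- continuity_2d_pt (fun u v => @?A u v - @?B u v) _ _ => apply (continuity_2d_pt_minus A B); solve_cont2d
  | |- continuity_2d_pt (fun u v => @?A u v * @?B u v) _ _ => apply (continuity_2d_pt_mult A B); solve_cont2d
  | |- continuity_2d_pt (fun u v => - @?A u v) _ _ => apply (continuity_2d_pt_opp A); solve_cont2d
  | |- continuity_2d_pt (fun u v => @?A u v / ?c) _ _ => apply (c2d_divc A c); solve_cont2d
  | |- continuity_2d_pt (fun u v => @?A u v ^ ?n) _ _ =>
      apply (continuity_1d_2d_pt_comp (fun z => z ^ n) A); [apply pow_cont | solve_cont2d]
  | |- continuity_2d_pt (fun u v => Rpower (@?A u v) ?e) _ _ =>
      apply (continuity_1d_2d_pt_comp (fun z => Rpower z e) A); [apply rp_cont; cbv beta; solve [auto] | solve_cont2d]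
  | |- continuity_2d_pt ?f ?x ?t => first [solve [eauto] | fail 2 "leaf" f]
  end.


Lemma rp_pos r e : 0 < Rpower r e.
Proof. unfold Rpower; apply exp_pos. Qed.

Lemma rp_one e : Rpower 1 e = 1.
Proof. unfold Rpower. rewrite ln_1, Rmult_0_r. apply exp_0. Qed.

Lemma rp_sub r c (n : nat) : 0 < r -> Rpower r (c - INR n) = Rpower r c / r ^ n.
Proof.
  intros Hr. unfold Rminus. rewrite Rpower_plus, Rpower_Ropp, Rpower_pow by auto.
  unfold Rdiv; reflexivity.
Qed.

(* Lowering the exponent by 1, 2, 3 (used to clear Rpower from field goals). *)
Lemma rp_m1 r c : 0 < r -> Rpower r (c - 1) = Rpower r c / r.
Proof. intros. replace 1 with (INR 1) by reflexivity. rewrite rp_sub; auto. simpl; field; lra. Qed.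
Lemma rp_m2 r c : 0 < r -> Rpower r (c - 2) = Rpower r c / r ^ 2.
Proof. intros. replace 2 with (INR 2) by (simpl; ring). rewrite rp_sub; auto. Qed.
Lemma rp_m3 r c : 0 < r -> Rpower r (c - 3) = Rpower r c / r ^ 3.
Proof. intros. replace 3 with (INR 3) by (simpl; ring). rewrite rp_sub; auto. Qed.

Lemma rp_sq x e : Rpower x (2 * e) = Rpower x e ^ 2.
Proof. replace (2 * e) with (e + e) by ring. rewrite Rpower_plus. ring. Qed.

Lemma rp_mul x y e : 0 < x -> 0 < y -> Rpower (x * y) e = Rpower x e * Rpower y e.
Proof. intros; rewrite Rpower_mult_distr; auto. Qed.

Lemma rp_inv x e : 0 < x -> e <> 0 -> Rpower (Rpower x e) (/ e) = x.
Proof. intros. rewrite Rpower_mult. replace (e * / e) with 1 by (field; auto). apply Rpower_1; auto. Qed.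

Lemma rp_2inv be : Rpower 2 (- / be) * Rpower 2 (/ be) = 1.
Proof. rewrite <- Rpower_plus. replace (- / be + / be) with 0 by ring. apply Rpower_O; lra. Qed.

Lemma rp_le_incr x y e : 0 < x <= y -> 0 <= e -> Rpower x e <= Rpower y e.
Proof. intros; apply Rle_Rpower_l; auto. Qed.

Lemma rp_le_decr x y e : 0 < x <= y -> e <= 0 -> Rpower y e <= Rpower x e.
Proof.
  intros Hxy He. replace e with (- (- e)) by ring. rewrite (Rpower_Ropp y (- e)), (Rpower_Ropp x (- e)).
  assert (0 < Rpower x (- e)) by apply rp_pos.
  apply Rinv_le_contravar; auto. apply rp_le_incr; auto; lra.
Qed.

Lemma rp_root_le x C e : 0 < x -> 0 < C -> 0 < e -> Rpower x e <= C -> x <= Rpower C (/ e).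
Proof.
  intros Hx HC He H. rewrite <- (rp_inv x e) at 1 by lra.
  apply rp_le_incr; [split; [apply rp_pos| auto]| left; apply Rinv_0_lt_compat; auto].
Qed.

(* (al - 1/2)^2 > 0 for al < 1/2: the constant 1 + 1/(al - 1/2)^2 is finite. *)
Lemma sq_half_pos al : al < / 2 -> 0 < (al - / 2) ^ 2.
Proof. intros. replace ((al - / 2) ^ 2) with ((/ 2 - al) ^ 2) by ring. apply pow_lt; lra. Qed.

Lemma rp_neg_inv x be : 0 < x -> 0 < be -> Rpower (Rpower x (- be)) (- / be) = x.
Proof. intros. rewrite Rpower_mult. replace (- be * - / be) with 1 by (field; lra). apply Rpower_1; auto. Qed.

(** * Energy balance for a conservation law on [a, b] x [0, T] *)

Lemma c2d_swap f x t : continuity_2d_pt f x t -> continuity_2d_pt (fun u v => f v u) t x.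
Proof.
  intros H eps. destruct (H eps) as [d Hd]. exists d. intros u v Hu Hv. apply Hd; auto.
Qed.

Lemma c2d_local_ext f g x t : (exists d, 0 < d /\ forall u v, Rabs (u - x) < d -> Rabs (v - t) < d -> f u v = g u v) ->
  continuity_2d_pt g x t -> continuity_2d_pt f x t.
Proof.
  intros [d [Hd Hfg]] H eps. destruct (H eps) as [d' Hd'].
  assert (Hm : 0 < Rmin d d') by (apply Rmin_pos; [lra| apply cond_pos]).
  exists (mkposreal _ Hm). simpl. intros u v Hu Hv.
  assert (H1 := Rmin_l d d'). assert (H2 := Rmin_r d d').
  rewrite !Hfg; try lra. apply Hd'; lra.
  rewrite !Rminus_eq_0, Rabs_R0; auto. rewrite !Rminus_eq_0, Rabs_R0; auto.
Qed.

Section ParametricIntegral.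
(* e is jointly continuous on [a,b] x [0,T]; we study s |-> ∫_a^b e(x, s) dx,
   written through the clamped extension of e so that it is defined for all s. *)
Variables (e : R -> R -> R) (a b T : R).
Hypothesis Hab : a < b.
Hypothesis He : forall x t, continuity_2d_pt (fun x t => e (clamp a b x) (clamp 0 T t)) x t.

Let ee s x := e (clamp a b x) (clamp 0 T s).

Lemma ex_RInt_param s : ex_RInt (ee s) a b.
Proof.
  apply (@ex_RInt_continuous R_CompleteNormedModule). intros z _.
  apply continuity_pt_filterlim. apply (c2d_section_x _ z s (He z s)).
Qed.

(* Continuity in s, from uniform continuity of e on a compact rectangle. *)
Lemma RInt_param_continuous s0 : continuity_pt (fun s => RInt (ee s) a b) s0.
Proof.
  intros eps0 Heps0.
  assert (Hq : 0 < eps0 / (2 * (b - a))) by (apply Rdiv_lt_0_compat; lra).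
  destruct (uniform_continuity_2d (fun x t => e (clamp a b x) (clamp 0 T t)) a b (s0 - 1) (s0 + 1))
    with (eps := mkposreal _ Hq) as [d Hd].
  { intros; apply He. }
  exists (Rmin d 1). split; [apply Rmin_pos; [apply cond_pos| lra]|].
  intros s [_ Hs]. simpl in Hs. unfold Rdist in *.
  assert (H1 := Rmin_l d 1). assert (H2 := Rmin_r d 1).
  change (Rabs (RInt (ee s) a b - RInt (ee s0) a b) < eps0).
  replace (RInt (ee s) a b - RInt (ee s0) a b) with (RInt (fun x => minus (ee s x) (ee s0 x)) a b)
    by (rewrite (@RInt_minus R_CompleteNormedModule) by apply ex_RInt_param; reflexivity).
  eapply Rle_lt_trans.
  - apply abs_RInt_le_const with (M := eps0 / (2 * (b - a))).
    + lra.
    + apply (@ex_RInt_minus R_NormedModule); apply ex_RInt_param.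
    + intros x Hx. unfold minus, plus, opp; simpl. left.
      apply (Hd x s0 x s);
      try lra; try (revert Hs; unfold Rabs; repeat destruct Rcase_abs; lra);
      try (rewrite Rminus_eq_0, Rabs_R0; apply cond_pos).
  - replace ((b - a) * (eps0 / (2 * (b - a)))) with (eps0 / 2) by (field; lra). lra.
Qed.

Variable et : R -> R -> R.
Hypothesis Het : forall x t, continuity_2d_pt (fun x t => et (clamp a b x) (clamp 0 T t)) x t.
Hypothesis Hde : forall x t, a <= x <= b -> 0 < t < T -> derivable_pt_lim (fun s => e x s) t (et x t).

Lemma RInt_param_derivable s0 : 0 < s0 < T ->
  derivable_pt_lim (fun s => RInt (ee s) a b) s0 (RInt (fun x => et x s0) a b).
Proof.
  intros Hs0. apply is_derive_Reals.
  assert (Hloc : forall s, Rabs (s - s0) < Rmin s0 (T - s0) -> 0 < s < T).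
  { intros s Hs. assert (H1 := Rmin_l s0 (T - s0)). assert (H2 := Rmin_r s0 (T - s0)).
    revert Hs; unfold Rabs; destruct Rcase_abs; lra. }
  assert (Hmp : 0 < Rmin s0 (T - s0)) by (apply Rmin_pos; lra).
  assert (HD : forall s x, 0 < s < T -> is_derive (fun u => ee u x) s (et (clamp a b x) s)).
  { intros s x Hs. apply is_derive_Reals. unfold ee.
    apply (derivable_clamped 0 T (fun u => e (clamp a b x) u)); auto.
    apply Hde; auto. apply clamp_in; lra. }
  replace (RInt (fun x => et x s0) a b) with (RInt (fun x => Derive (fun u => ee u x) s0) a b).
  2: { apply RInt_ext. intros x Hx. rewrite Rmin_left, Rmax_right in Hx by lra.
       transitivity (et (clamp a b x) s0); [apply is_derive_unique, HD; auto|].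
       rewrite clamp_id; auto; lra. }
  apply is_derive_RInt_param.
  - exists (mkposreal _ Hmp). intros s Hs x _. simpl in Hs.
    eexists. apply HD. apply Hloc. exact Hs.
  - intros x _.
    apply c2d_local_ext with (g := fun u v => et (clamp a b v) (clamp 0 T u)).
    + exists (Rmin s0 (T - s0)). split; auto. intros u v Hu Hv.
      transitivity (et (clamp a b v) u); [apply is_derive_unique, HD, Hloc; auto|].
      rewrite (clamp_id 0 T u); auto. apply Hloc in Hu; lra.
    + apply (c2d_swap (fun x t => et (clamp a b x) (clamp 0 T t))). apply Het.
  - apply filter_forall. intros s. apply ex_RInt_param.
Qed.

End ParametricIntegral.

(* The time derivative of the energy equals ∫ e_t <= - ∫ F_x = F(a) - F(b). *)
Lemma energy_balance (e et F Fx : R -> R -> R) a b T eps :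
  a < b -> 0 < T ->
  (forall x t, continuity_2d_pt (fun x t => e (clamp a b x) (clamp 0 T t)) x t) ->
  (forall x t, continuity_2d_pt (fun x t => et (clamp a b x) (clamp 0 T t)) x t) ->
  (forall t, 0 < t < T -> cont_ab a b (fun x => F x t)) ->
  (forall t, 0 < t < T -> cont_ab a b (fun x => Fx x t)) ->
  (forall x t, a <= x <= b -> 0 < t < T -> derivable_pt_lim (fun s => e x s) t (et x t)) ->
  (forall x t, a < x < b -> 0 < t < T -> derivable_pt_lim (fun y => F y t) x (Fx x t)) ->
  (forall x t, a < x < b -> 0 < t < T -> et x t + Fx x t <= 0) ->
  (forall t, 0 < t < T -> F a t - F b t <= eps) ->
  forall t, 0 <= t <= T -> RInt (fun x => e x t) a b <= RInt (fun x => e x 0) a b + eps * t.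
Proof.
  intros Hab HT He Het HF HFx Hde HdF Hineq Hflux.
  set (g := fun s => RInt (fun x => e (clamp a b x) (clamp 0 T s)) a b).
  assert (Hg : forall s, 0 <= s <= T -> g s = RInt (fun x => e x s) a b).
  { intros s Hs. unfold g. apply RInt_ext. intros x Hx.
    rewrite Rmin_left, Rmax_right in Hx by lra. rewrite !clamp_id; auto; lra. }
  assert (Hrate : forall s, 0 < s < T -> RInt (fun x => et x s) a b <= eps).
  { intros s Hs.
    assert (Het_s : cont_ab a b (fun x => et x s)) by (apply (c2d_cont_ab et a b T s); auto; lra).
    assert (HFx_s := HFx s Hs).
    assert (HexFx : ex_RInt (fun x => Fx x s) a b) by (apply cont_ab_ex_RInt; auto; lra).
    apply Rle_trans with (RInt (fun x => opp (Fx x s)) a b).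
    - apply RInt_le; try lra.
      + apply cont_ab_ex_RInt; auto; lra.
      + apply (@ex_RInt_opp R_NormedModule); exact HexFx.
      + intros x Hx. specialize (Hineq x s Hx Hs). unfold opp; simpl. lra.
    - rewrite (@RInt_opp R_CompleteNormedModule) by exact HexFx.
      rewrite (ftc_interval a b (fun x => F x s) (fun x => Fx x s)); auto; try lra.
      unfold opp; simpl. specialize (Hflux s Hs). lra. }
  intros t Ht.
  destruct (Req_dec t 0) as [->|Ht0]; [lra|].
  rewrite <- (Hg t Ht), <- (Hg 0) by lra.
  destruct (mvt_interior g (fun s => RInt (fun x => et x s) a b) 0 t) as [c [Hc Hgc]]; try lra.
  { intros; apply RInt_param_continuous; auto. }
  { intros c Hc. apply (RInt_param_derivable e a b T); auto. lra. }
  assert (RInt (fun x => et x c) a b <= eps) by (apply Hrate; lra).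
  assert (RInt (fun x => et x c) a b * (t - 0) <= eps * (t - 0)) by (apply Rmult_le_compat_r; lra).
  lra.
Qed.

(** * Equality of mixed partial derivatives *)

(* Mean value theorem for the double difference
   f(x0+h,t0+h) - f(x0+h,t0) - f(x0,t0+h) + f(x0,t0), computed in both orders:
   f_xt and f_tx take the same value h^-2 * (double difference) at two points
   of the square [x0, x0+h] x [t0, t0+h]. *)
Lemma double_difference_mvt (f fx ft fxt ftx : R -> R -> R) x0 t0 h : 0 < h ->
  (forall x t, Rabs (x - x0) <= h -> Rabs (t - t0) <= h -> derivable_pt_lim (fun y => f y t) x (fx x t)) ->
  (forall x t, Rabs (x - x0) <= h -> Rabs (t - t0) <= h -> derivable_pt_lim (fun s => f x s) t (ft x t)) ->
  (forall x t, Rabs (x - x0) <= h -> Rabs (t - t0) <= h -> derivable_pt_lim (fun s => fx x s) t (fxt x t)) ->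
  (forall x t, Rabs (x - x0) <= h -> Rabs (t - t0) <= h -> derivable_pt_lim (fun y => ft y t) x (ftx x t)) ->
  exists xi eta xi2 eta2, Rabs (xi - x0) <= h /\ Rabs (eta - t0) <= h /\
    Rabs (xi2 - x0) <= h /\ Rabs (eta2 - t0) <= h /\ fxt xi eta = ftx xi2 eta2.
Proof.
  intros Hh Hfx Hft Hfxt Hftx.
  assert (Hab : forall z z0, z0 <= z <= z0 + h -> Rabs (z - z0) <= h)
    by (intros z z0 Hz; rewrite Rabs_right by lra; lra).
  assert (H0 : Rabs (x0 - x0) <= h) by (rewrite Rminus_eq_0, Rabs_R0; lra).
  assert (H0' : Rabs (t0 - t0) <= h) by (rewrite Rminus_eq_0, Rabs_R0; lra).
  assert (Hh1 : Rabs (x0 + h - x0) <= h) by (apply Hab; lra).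
  assert (Hh2 : Rabs (t0 + h - t0) <= h) by (apply Hab; lra).
  destruct (MVT_cor2 (fun y => f y (t0 + h) - f y t0) (fun y => fx y (t0 + h) - fx y t0) x0 (x0 + h))
    as [xi [E1 Hxi]]; [lra| |].
  { intros c Hc. apply (dpl_minus (fun y => f y (t0 + h)) (fun y => f y t0)); apply Hfx; auto; apply Hab; lra. }
  destruct (MVT_cor2 (fun s => fx xi s) (fun s => fxt xi s) t0 (t0 + h)) as [eta [E2 Heta]]; [lra| |].
  { intros c Hc. apply Hfxt; apply Hab; lra. }
  destruct (MVT_cor2 (fun s => f (x0 + h) s - f x0 s) (fun s => ft (x0 + h) s - ft x0 s) t0 (t0 + h))
    as [eta2 [E3 Heta2]]; [lra| |].
  { intros c Hc. apply (dpl_minus (fun s => f (x0 + h) s) (fun s => f x0 s)); apply Hft; auto; apply Hab; lra. }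
  destruct (MVT_cor2 (fun y => ft y eta2) (fun y => ftx y eta2) x0 (x0 + h)) as [xi2 [E4 Hxi2]]; [lra| |].
  { intros c Hc. apply Hftx; apply Hab; lra. }
  exists xi, eta, xi2, eta2. repeat split; try (apply Hab; lra).
  replace (x0 + h - x0) with h in E1, E4 by ring.
  replace (t0 + h - t0) with h in E2, E3 by ring.
  rewrite E2 in E1. rewrite E4 in E3.
  apply Rmult_eq_reg_r with (h * h); [|apply Rgt_not_eq, Rmult_lt_0_compat; lra].
  lra.
Qed.

(* Schwarz's theorem: if f_xt and f_tx exist near (x0,t0) and are continuous
   there, they agree (both are limits of the double-difference quotient). *)
Lemma schwarz_mixed (f fx ft fxt ftx : R -> R -> R) x0 t0 del :
  0 < del ->
  (forall x t, Rabs (x - x0) < del -> Rabs (t - t0) < del -> derivable_pt_lim (fun y => f y t) x (fx x t)) ->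
  (forall x t, Rabs (x - x0) < del -> Rabs (t - t0) < del -> derivable_pt_lim (fun s => f x s) t (ft x t)) ->
  (forall x t, Rabs (x - x0) < del -> Rabs (t - t0) < del -> derivable_pt_lim (fun s => fx x s) t (fxt x t)) ->
  (forall x t, Rabs (x - x0) < del -> Rabs (t - t0) < del -> derivable_pt_lim (fun y => ft y t) x (ftx x t)) ->
  continuity_2d_pt fxt x0 t0 -> continuity_2d_pt ftx x0 t0 ->
  fxt x0 t0 = ftx x0 t0.
Proof.
  intros Hdel Hfx Hft Hfxt Hftx C1 C2.
  apply Rminus_diag_uniq. apply Rabs_eq_0.
  apply Rle_antisym; [|apply Rabs_pos].
  apply Rnot_lt_le. intros Hlt.
  set (eps := Rabs (fxt x0 t0 - ftx x0 t0)) in *.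
  assert (He2 : 0 < eps / 2) by lra.
  destruct (C1 (mkposreal _ He2)) as [d1 Hd1].
  destruct (C2 (mkposreal _ He2)) as [d2 Hd2]. simpl in Hd1, Hd2.
  assert (Hmp : 0 < Rmin del (Rmin d1 d2)) by (repeat apply Rmin_pos; auto; apply cond_pos).
  set (h := Rmin del (Rmin d1 d2) / 2).
  assert (Hm1 := Rmin_l del (Rmin d1 d2)). assert (Hm2 := Rmin_r del (Rmin d1 d2)).
  assert (Hm3 := Rmin_l d1 d2). assert (Hm4 := Rmin_r d1 d2).
  assert (Hhd : 0 < h /\ h < del /\ h < d1 /\ h < d2) by (unfold h; lra).
  destruct (double_difference_mvt f fx ft fxt ftx x0 t0 h ltac:(lra)
              ltac:(intros x t Hx Ht; apply Hfx; lra) ltac:(intros x t Hx Ht; apply Hft; lra)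
              ltac:(intros x t Hx Ht; apply Hfxt; lra) ltac:(intros x t Hx Ht; apply Hftx; lra))
    as [xi [eta [xi2 [eta2 [B1 [B2 [B3 [B4 Heq]]]]]]]].
  assert (A1 : Rabs (fxt xi eta - fxt x0 t0) < eps / 2) by (apply Hd1; lra).
  assert (A2 : Rabs (ftx xi2 eta2 - ftx x0 t0) < eps / 2) by (apply Hd2; lra).
  rewrite Heq in A1.
  assert (Rabs (fxt x0 t0 - ftx x0 t0) <= Rabs (ftx xi2 eta2 - fxt x0 t0) + Rabs (ftx xi2 eta2 - ftx x0 t0)).
  { replace (fxt x0 t0 - ftx x0 t0) with (-(ftx xi2 eta2 - fxt x0 t0) + (ftx xi2 eta2 - ftx x0 t0)) by ring.
    eapply Rle_trans; [apply Rabs_triang|]. rewrite Rabs_Ropp. lra. }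
  unfold eps in *. lra.
Qed.

Definition interior_pt (X : R -> Prop) x := exists d, 0 < d /\ forall y, Rabs (y - x) < d -> X y.

Lemma interior_pt_open X x : interior_pt X x -> exists d, 0 < d /\ forall y, Rabs (y - x) < d -> interior_pt X y.
Proof.
  intros [d [Hd H]]. exists (d / 2). split; [lra|]. intros y Hy. exists (d / 2). split; [lra|].
  intros z Hz. apply H. revert Hy Hz. unfold Rabs; repeat destruct Rcase_abs; lra.
Qed.

Lemma interior_pt_elim X x : interior_pt X x -> X x.
Proof. intros [d [Hd HX]]. apply HX. rewrite Rminus_eq_0, Rabs_R0; auto. Qed.

Lemma interior_pt_of_interval X a b x : (forall y, a <= y <= b -> X y) -> a < x < b -> interior_pt X x.
Proof.
  intros HX Hx. exists (Rmin (x - a) (b - x)). split; [apply Rmin_pos; lra|]. intros y Hy. apply HX.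
  assert (H1 := Rmin_l (x - a) (b - x)). assert (H2 := Rmin_r (x - a) (b - x)).
  revert Hy; unfold Rabs; destruct Rcase_abs; lra.
Qed.

Lemma cont_on_ext (D : R -> R -> Prop) f g : (forall x t, g x t = f x t) -> cont_on D f -> cont_on D g.
Proof.
  intros H Hc x t Hxt eps Heps. destruct (Hc x t Hxt eps Heps) as [d [Hd H1]].
  exists d; split; auto. intros; rewrite !H; auto.
Qed.

Record second_order (D : R -> R -> Prop) (f fx ft fxx fxt ftx : R -> R -> R) : Prop := {
  so_cont : cont_on D f /\ cont_on D fx /\ cont_on D ft /\
            cont_on D fxx /\ cont_on D fxt /\ cont_on D ftx;
  so_deriv : forall x t, D x t ->
    pdx D f x t (fx x t) /\ pdt D f x t (ft x t) /\ pdx D fx x t (fxx x t) /\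
    pdt D fx x t (fxt x t) /\ pdx D ft x t (ftx x t)
}.

Lemma smooth_second_order (D : R -> R -> Prop) P f : smooth_on D P f ->
  exists fx ft fxx fxt ftx, P fx /\ second_order D f fx ft fxx fxt ftx.
Proof.
  intros [fx ft _ Cf Hfx Hft Sfx Sft].
  destruct Sfx as [fxx fxt Pfx Cfx Hfxx Hfxt Sfxx Sfxt].
  destruct Sft as [ftx ftt _ Cft Hftx _ Sftx _].
  destruct Sftx as [? ? _ Cftx _ _ _ _].
  destruct Sfxx as [? ? _ Cfxx _ _ _ _].
  destruct Sfxt as [? ? _ Cfxt _ _ _ _].
  exists fx, ft, fxx, fxt, ftx. split; [exact Pfx|]. split; [repeat split; auto|].
  intros x t Hxt. repeat split; auto.
Qed.

Lemma second_order_shift (D : R -> R -> Prop) f g c fx ft fxx fxt ftx :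
  (forall x t, f x t = g x t - c) -> second_order D f fx ft fxx fxt ftx ->
  second_order D g fx ft fxx fxt ftx.
Proof.
  intros Hf [[Cf C] Hd]. split.
  - split; [|exact C]. apply cont_on_ext with (fun x t => f x t + c); [intros; rewrite Hf; ring|].
    intros x t Hxt eps Heps. destruct (Cf x t Hxt eps Heps) as [d [Hd' H1]].
    exists d; split; auto. intros. replace (f y s + c - (f x t + c)) with (f y s - f x t) by ring. auto.
  - intros x t Hxt. destruct (Hd x t Hxt) as [Hx [Ht R]]. split; [|split; [|exact R]].
    + intros eps Heps. destruct (Hx eps Heps) as [d [Hd' H1]]. exists d. split; auto.
      intros h Hh. simpl. replace (g (x + h) t - g x t) with (f (x + h) t - f x t)
        by (rewrite !Hf; ring). apply H1, Hh.
    + intros eps Heps. destruct (Ht eps Heps) as [d [Hd' H1]]. exists d. split; auto.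
      intros h Hh. simpl. replace (g x (t + h) - g x t) with (f x (t + h) - f x t)
        by (rewrite !Hf; ring). apply H1, Hh.
Qed.

Section Domain.
Variables (D : R -> R -> Prop) (X : R -> Prop) (T : R).
Hypothesis HD : forall x t, D x t <-> X x /\ 0 <= t <= T.

Lemma pdx_derivable f x t l : interior_pt X x -> 0 <= t <= T ->
  pdx D f x t l -> derivable_pt_lim (fun y => f y t) x l.
Proof.
  intros [d [Hd HX]] Ht H eps Heps.
  destruct (H eps Heps) as [alp [Halp H1]].
  assert (Hm : 0 < Rmin alp d) by (apply Rmin_pos; lra).
  exists (mkposreal _ Hm). intros h Hh Hha. simpl in Hha.
  assert (Hm1 := Rmin_l alp d). assert (Hm2 := Rmin_r alp d).
  apply (H1 h). simpl. unfold Rdist. rewrite Rminus_0_r. split; [|lra].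
  split; [exact Hh|]. apply HD. split; [apply HX; replace (x + h - x) with h by ring; lra| exact Ht].
Qed.

Lemma pdt_derivable f x t l : X x -> 0 < t < T ->
  pdt D f x t l -> derivable_pt_lim (fun s => f x s) t l.
Proof.
  intros HX Ht H eps Heps.
  destruct (H eps Heps) as [alp [Halp H1]].
  assert (Hm : 0 < Rmin alp (Rmin t (T - t))) by (repeat apply Rmin_pos; lra).
  exists (mkposreal _ Hm). intros h Hh Hha. simpl in Hha.
  assert (Hm1 := Rmin_l alp (Rmin t (T - t))). assert (Hm2 := Rmin_r alp (Rmin t (T - t))).
  assert (Hm3 := Rmin_l t (T - t)). assert (Hm4 := Rmin_r t (T - t)).
  assert (Hh2 : - Rabs h <= h <= Rabs h) by (unfold Rabs; destruct Rcase_abs; lra).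
  apply (H1 h). simpl. unfold Rdist. rewrite Rminus_0_r. split; [|lra].
  split; [exact Hh|]. apply HD. split; [exact HX| lra].
Qed.

Lemma cont_on_c2d f x t : interior_pt X x -> 0 < t < T -> cont_on D f -> continuity_2d_pt f x t.
Proof.
  intros [d [Hd HX]] Ht Hc eps. destruct (Hc x t) with (eps := pos eps) as [del [Hdel H]].
  { apply HD. split; [apply HX; rewrite Rminus_eq_0, Rabs_R0|]; lra. }
  { apply cond_pos. }
  assert (Hm : 0 < Rmin del (Rmin d (Rmin t (T - t)))) by (repeat apply Rmin_pos; lra).
  exists (mkposreal _ Hm). simpl. intros y s Hy Hs.
  assert (H1 := Rmin_l del (Rmin d (Rmin t (T - t)))). assert (H2 := Rmin_r del (Rmin d (Rmin t (T - t)))).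
  assert (H3 := Rmin_l d (Rmin t (T - t))). assert (H4 := Rmin_r d (Rmin t (T - t))).
  assert (H5 := Rmin_l t (T - t)). assert (H6 := Rmin_r t (T - t)).
  apply H; try lra. apply HD. split; [apply HX; lra|].
  revert Hs; unfold Rabs; destruct Rcase_abs; lra.
Qed.

Lemma cont_on_clamped f a b : a < b -> 0 < T -> (forall y, a <= y <= b -> X y) ->
  cont_on D f -> forall x t, continuity_2d_pt (fun x t => f (clamp a b x) (clamp 0 T t)) x t.
Proof.
  intros Hab HT HX Hc x t eps.
  assert (Hx := clamp_in a b x ltac:(lra)). assert (Ht := clamp_in 0 T t ltac:(lra)).
  destruct (Hc (clamp a b x) (clamp 0 T t)) with (eps := pos eps) as [del [Hdel H1]].
  { apply HD. split; [apply HX; lra| lra]. }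
  { apply cond_pos. }
  exists (mkposreal _ Hdel). intros u v Hu Hv. simpl in Hu, Hv.
  assert (Hu' := clamp_in a b u ltac:(lra)). assert (Hv' := clamp_in 0 T v ltac:(lra)).
  apply H1.
  - apply HD. split; [apply HX; lra| lra].
  - eapply Rle_lt_trans; [apply clamp_lip; lra| exact Hu].
  - eapply Rle_lt_trans; [apply clamp_lip; lra| exact Hv].
Qed.

Section SecondOrder.
Variables f fx ft fxx fxt ftx : R -> R -> R.
Hypothesis Hf : second_order D f fx ft fxx fxt ftx.

Lemma second_order_dx x t : interior_pt X x -> 0 <= t <= T ->
  derivable_pt_lim (fun y => f y t) x (fx x t) /\
  derivable_pt_lim (fun y => fx y t) x (fxx x t) /\
  derivable_pt_lim (fun y => ft y t) x (ftx x t).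
Proof.
  intros Hx Ht. assert (Hxt : D x t) by (apply HD; split; [apply interior_pt_elim|]; auto).
  destruct (so_deriv _ _ _ _ _ _ _ Hf x t Hxt) as [H1 [_ [H3 [_ H5]]]].
  repeat split; apply pdx_derivable; auto.
Qed.

Lemma second_order_dt x t : X x -> 0 < t < T ->
  derivable_pt_lim (fun s => f x s) t (ft x t) /\
  derivable_pt_lim (fun s => fx x s) t (fxt x t).
Proof.
  intros Hx Ht. assert (Hxt : D x t) by (apply HD; split; [|lra]; auto).
  destruct (so_deriv _ _ _ _ _ _ _ Hf x t Hxt) as [_ [H2 [_ [H4 _]]]].
  split; apply pdt_derivable; auto.
Qed.

Lemma second_order_mixed x t : interior_pt X x -> 0 < t < T -> fxt x t = ftx x t.
Proof.
  intros Hx Ht.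
  destruct (interior_pt_open X x Hx) as [d1 [Hd1 Hnear]].
  set (del := Rmin d1 (Rmin t (T - t))).
  assert (Hdel : 0 < del) by (unfold del; repeat apply Rmin_pos; lra).
  assert (Hm1 := Rmin_l d1 (Rmin t (T - t))). assert (Hm2 := Rmin_r d1 (Rmin t (T - t))).
  assert (Hm3 := Rmin_l t (T - t)). assert (Hm4 := Rmin_r t (T - t)).
  assert (Hball : forall y s, Rabs (y - x) < del -> Rabs (s - t) < del -> interior_pt X y /\ 0 < s < T).
  { intros y s Hy Hs. split; [apply Hnear; unfold del in *; lra|].
    revert Hs; unfold del in *; unfold Rabs; destruct Rcase_abs; lra. }
  destruct (so_cont _ _ _ _ _ _ _ Hf) as [_ [_ [_ [_ [Cfxt Cftx]]]]].
  apply (schwarz_mixed f fx ft fxt ftx x t del Hdel); try (apply cont_on_c2d; auto);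
    intros y s Hy Hs; destruct (Hball y s Hy Hs) as [Hy' Hs'].
  - apply (second_order_dx y s); auto; lra.
  - apply (second_order_dt y s); auto. apply interior_pt_elim; auto.
  - apply (second_order_dt y s); auto. apply interior_pt_elim; auto.
  - apply (second_order_dx y s); auto; lra.
Qed.

End SecondOrder.
End Domain.

Record regular_solution (X : R -> Prop) (T gamma alpha : R)
    (r rx rt rxx rxt u ux ut uxx : R -> R -> R) : Prop := {
  rs_pos : forall x t, X x -> 0 <= t <= T -> 0 < r x t;
  rs_dx : forall x t, interior_pt X x -> 0 <= t <= T ->
     derivable_pt_lim (fun y => r y t) x (rx x t) /\
     derivable_pt_lim (fun y => rx y t) x (rxx x t) /\
     derivable_pt_lim (fun y => u y t) x (ux x t) /\
     derivable_pt_lim (fun y => ux y t) x (uxx x t);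
  rs_dt : forall x t, X x -> 0 < t < T ->
     derivable_pt_lim (fun s => r x s) t (rt x t) /\
     derivable_pt_lim (fun s => rx x s) t (rxt x t) /\
     derivable_pt_lim (fun s => u x s) t (ut x t);
  rs_mass : forall x t, interior_pt X x -> 0 < t < T ->
     rt x t = - (rx x t * u x t + r x t * ux x t);
  rs_mass_x : forall x t, interior_pt X x -> 0 < t < T ->
     rxt x t = - (rxx x t * u x t + 2 * rx x t * ux x t + r x t * uxx x t);
  rs_momentum : forall x t, interior_pt X x -> 0 < t < T ->
     rt x t * u x t + r x t * ut x t + (rx x t * u x t ^ 2 + r x t * (2 * u x t * ux x t))
     + gamma * Rpower (r x t) (gamma - 1) * rx x t
     = alpha * Rpower (r x t) (alpha - 1) * rx x t * ux x t + Rpower (r x t) alpha * uxx x t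
}.
Arguments rs_pos {X T gamma alpha r rx rt rxx rxt u ux ut uxx}.
Arguments rs_dx {X T gamma alpha r rx rt rxx rxt u ux ut uxx}.
Arguments rs_dt {X T gamma alpha r rx rt rxx rxt u ux ut uxx}.
Arguments rs_mass {X T gamma alpha r rx rt rxx rxt u ux ut uxx}.
Arguments rs_mass_x {X T gamma alpha r rx rt rxx rxt u ux ut uxx}.
Arguments rs_momentum {X T gamma alpha r rx rt rxx rxt u ux ut uxx}.

Section SmoothSolution.
Variables (D : R -> R -> Prop) (X : R -> Prop) (T gamma alpha : R) (rho u : R -> R -> R).
Hypothesis HD : forall x t, D x t <-> X x /\ 0 <= t <= T.
Hypothesis Hsol : is_solution D gamma alpha rho u.
Variables rx rt rxx rxt rtx ux ut uxx uxt utx : R -> R -> R.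
Hypothesis Hrho : second_order D rho rx rt rxx rxt rtx.
Hypothesis Hu : second_order D u ux ut uxx uxt utx.

Let D_of x t : interior_pt X x -> 0 <= t <= T -> D x t.
Proof. intros Hx Ht. apply HD. split; [apply interior_pt_elim|]; auto. Qed.

Lemma smooth_mass x t : interior_pt X x -> 0 < t < T ->
  rt x t = - (rx x t * u x t + rho x t * ux x t).
Proof.
  intros Hx Ht. destruct Hsol as [_ [Hmass _]].
  destruct (Hmass x t (D_of x t Hx ltac:(lra))) as [a [b [Ha [Hb Hab]]]].
  apply (pdt_derivable D X T HD) in Ha; [|apply interior_pt_elim; auto| auto].
  apply (pdx_derivable D X T HD) in Hb; auto; try lra.
  destruct (second_order_dx D X T HD _ _ _ _ _ _ Hrho x t Hx ltac:(lra)) as [R1 _].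
  destruct (second_order_dx D X T HD _ _ _ _ _ _ Hu x t Hx ltac:(lra)) as [U1 _].
  destruct (second_order_dt D X T HD _ _ _ _ _ _ Hrho x t (interior_pt_elim _ _ Hx) Ht) as [R2 _].
  assert (a = rt x t) by (eapply uniqueness_limite; eauto).
  assert (b = rx x t * u x t + rho x t * ux x t).
  { eapply uniqueness_limite; [exact Hb|]. apply (dpl_mult (fun y => rho y t) (fun y => u y t)); auto. }
  lra.
Qed.

(* Differentiating the mass equation in x, using rho_xt = rho_tx. *)
Lemma smooth_mass_x x t : interior_pt X x -> 0 < t < T ->
  rxt x t = - (rxx x t * u x t + 2 * rx x t * ux x t + rho x t * uxx x t).
Proof.
  intros Hx Ht.
  rewrite (second_order_mixed D X T HD _ _ _ _ _ _ Hrho x t Hx Ht).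
  destruct (second_order_dx D X T HD _ _ _ _ _ _ Hrho x t Hx ltac:(lra)) as [R1 [R2 R3]].
  destruct (second_order_dx D X T HD _ _ _ _ _ _ Hu x t Hx ltac:(lra)) as [U1 [U2 _]].
  eapply uniqueness_limite; [exact R3|].
  apply (derivable_local (fun y => - (rx y t * u y t + rho y t * ux y t)) (fun y => rt y t)).
  - destruct (interior_pt_open X x Hx) as [d1 [Hd1 Hnear]].
    exists d1. split; [exact Hd1| intros z Hz; apply smooth_mass; auto].
  - eapply dpl_eq; [solve_derive|]. ring.
Qed.

Lemma smooth_momentum x t : interior_pt X x -> 0 < t < T ->
  rt x t * u x t + rho x t * ut x t + (rx x t * u x t ^ 2 + rho x t * (2 * u x t * ux x t))
  + gamma * Rpower (rho x t) (gamma - 1) * rx x t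
  = alpha * Rpower (rho x t) (alpha - 1) * rx x t * ux x t + Rpower (rho x t) alpha * uxx x t.
Proof.
  intros Hx Ht. destruct Hsol as [Hpos [_ [uxs [Huxs Hmom]]]].
  destruct (Hmom x t (D_of x t Hx ltac:(lra))) as [a [b [c' [Ha [Hb [Hc Habc]]]]]].
  apply (pdt_derivable D X T HD) in Ha; [|apply interior_pt_elim; auto| auto].
  apply (pdx_derivable D X T HD) in Hb; auto; try lra.
  apply (pdx_derivable D X T HD) in Hc; auto; try lra.
  destruct (second_order_dx D X T HD _ _ _ _ _ _ Hrho x t Hx ltac:(lra)) as [R1 _].
  destruct (second_order_dx D X T HD _ _ _ _ _ _ Hu x t Hx ltac:(lra)) as [U1 [U2 _]].
  destruct (second_order_dt D X T HD _ _ _ _ _ _ Hrho x t (interior_pt_elim _ _ Hx) Ht) as [R4 _].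
  destruct (second_order_dt D X T HD _ _ _ _ _ _ Hu x t (interior_pt_elim _ _ Hx) Ht) as [U4 _].
  assert (Hp : 0 < rho x t) by (apply Hpos, D_of; auto; lra).
  assert (a = rt x t * u x t + rho x t * ut x t).
  { eapply uniqueness_limite; [exact Ha|]. apply (dpl_mult (fun s => rho x s) (fun s => u x s)); auto. }
  assert (b = rx x t * u x t ^ 2 + rho x t * (2 * u x t * ux x t) + gamma * Rpower (rho x t) (gamma - 1) * rx x t).
  { eapply uniqueness_limite; [exact Hb|]. eapply dpl_eq; [solve_derive|]. simpl. ring. }
  assert (c' = alpha * Rpower (rho x t) (alpha - 1) * rx x t * ux x t + Rpower (rho x t) alpha * uxx x t).
  { eapply uniqueness_limite; [exact Hc|].
    apply derivable_local with (fun y => Rpower (rho y t) alpha * ux y t).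
    - (* the velocity gradient of [is_solution] is the one of the smooth data *)
      destruct (interior_pt_open X x Hx) as [d1 [Hd1 Hnear]]. exists d1. split; [exact Hd1|]. intros z Hz.
      f_equal. eapply uniqueness_limite.
      + apply (pdx_derivable D X T HD u z t); auto; [lra|]. apply Huxs, D_of; auto; lra.
      + apply (second_order_dx D X T HD _ _ _ _ _ _ Hu z t); auto; lra.
    - eapply dpl_eq; [solve_derive|]. ring. }
  lra.
Qed.

End SmoothSolution.

Lemma regular_solution_of_smooth (D : R -> R -> Prop) X T gamma alpha rho u f c (P Q : (R -> R -> R) -> Prop) :
  (forall x t, D x t <-> X x /\ 0 <= t <= T) -> 0 < T ->
  (forall x t, f x t = rho x t - c) ->
  is_solution D gamma alpha rho u -> smooth_on D P f -> smooth_on D Q u ->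
  exists rx rt rxx rxt ux ut uxx,
    regular_solution X T gamma alpha rho rx rt rxx rxt u ux ut uxx /\
    cont_on D rho /\ cont_on D rx /\ cont_on D rt /\ cont_on D rxx /\ cont_on D rxt /\
    cont_on D u /\ cont_on D ux /\ cont_on D ut /\ cont_on D uxx /\ P rx /\ Q ux.
Proof.
  intros HD HT Hf Hsol Hs Hsu.
  destruct (smooth_second_order D P f Hs) as [rx [rt [rxx [rxt [rtx [Prx Hf2]]]]]].
  apply (second_order_shift D f rho c) in Hf2; [|exact Hf].
  destruct (smooth_second_order D Q u Hsu) as [ux [ut [uxx [uxt [utx [Qux Hu2]]]]]].
  exists rx, rt, rxx, rxt, ux, ut, uxx.
  destruct (so_cont _ _ _ _ _ _ _ Hf2) as [C1 [C2 [C3 [C4 [C5 _]]]]].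
  destruct (so_cont _ _ _ _ _ _ _ Hu2) as [C6 [C7 [C8 [C9 _]]]].
  split; [|repeat split; auto].
  split.
  - intros x t Hx Ht. destruct Hsol as [Hpos _]. apply Hpos, HD; auto.
  - intros x t Hx Ht.
    destruct (second_order_dx D X T HD _ _ _ _ _ _ Hf2 x t Hx Ht) as [? [? _]].
    destruct (second_order_dx D X T HD _ _ _ _ _ _ Hu2 x t Hx Ht) as [? [? _]]. auto.
  - intros x t Hx Ht.
    destruct (second_order_dt D X T HD _ _ _ _ _ _ Hf2 x t Hx Ht) as [? ?].
    destruct (second_order_dt D X T HD _ _ _ _ _ _ Hu2 x t Hx Ht) as [? _]. auto.
  - apply (smooth_mass D X T gamma alpha rho u HD Hsol rx rt rxx rxt rtx ux ut uxx uxt utx); auto.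
  - apply (smooth_mass_x D X T gamma alpha rho u HD Hsol rx rt rxx rxt rtx ux ut uxx uxt utx); auto.
  - apply (smooth_momentum D X T gamma alpha rho u HD Hsol rx rt rxx rxt rtx ux ut uxx uxt utx); auto.
Qed.

(** * Energy and BD entropy *)

(* Pressure potential G(r) = (r^g - A - B r)/(g - 1): with A = B = 0 it is
   r^g/(g-1); with A, B the tangent data at rhobar it is rho Psi(rho, rhobar).
   The energy is e = r u^2/2 + G(r) with flux F; e_t and F_x are written out
   explicitly (as functions of the derivatives) so that [solve_derive] can check them. *)
Definition potential g A B r := (Rpower r g - A - B * r) / (g - 1).
Definition dpotential g B r := (g * Rpower r (g - 1) - B) / (g - 1).
Definition energy_dens g A B r u := r * u ^ 2 / 2 + potential g A B r.
Definition energy_flux g al A B r u ux :=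
  r * u ^ 3 / 2 + potential g A B r * u + (Rpower r g + A / (g - 1)) * u - Rpower r al * u * ux.
Definition energy_dens_t g B r rt u ut := rt * u ^ 2 / 2 + r * (2 * u * ut) / 2 + dpotential g B r * rt.
Definition energy_flux_x g al A B r rx u ux uxx :=
  rx * u ^ 3 / 2 + r * (3 * u ^ 2 * ux) / 2 + dpotential g B r * rx * u + potential g A B r * ux
  + g * Rpower r (g - 1) * rx * u + (Rpower r g + A / (g - 1)) * ux
  - (al * Rpower r (al - 1) * rx * u * ux + Rpower r al * ux * ux + Rpower r al * u * uxx).

(* BD entropy: the velocity u is replaced by u + w with w = r^(al-2) r_x. *)
Definition bd_vel al r rx := Rpower r (al - 2) * rx.
Definition bd_dens g al A B r rx u := r * (u + bd_vel al r rx) ^ 2 / 2 + potential g A B r.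
Definition bd_flux g al A B r rx u :=
  r * u * (u + bd_vel al r rx) ^ 2 / 2 + potential g A B r * u + (Rpower r g + A / (g - 1)) * u.
Definition bd_dens_t g al B r rx rt rxt u ut :=
  rt * (u + bd_vel al r rx) ^ 2 / 2
  + r * (2 * (u + bd_vel al r rx) * (ut + ((al - 2) * Rpower r (al - 3) * rt * rx + Rpower r (al - 2) * rxt))) / 2
  + dpotential g B r * rt.
Definition bd_flux_x g al A B r rx rxx u ux :=
  (rx * u + r * ux) * (u + bd_vel al r rx) ^ 2 / 2
  + r * u * (2 * (u + bd_vel al r rx) * (ux + ((al - 2) * Rpower r (al - 3) * rx * rx + Rpower r (al - 2) * rxx))) / 2
  + dpotential g B r * rx * u + potential g A B r * ux + g * Rpower r (g - 1) * rx * u + (Rpower r g + A / (g - 1)) * ux.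

Lemma potential_00 g r : 1 < g -> potential g 0 0 r = Rpower r g / (g - 1).
Proof. intros; unfold potential. field. lra. Qed.

Lemma potential_00_nonneg g r : 1 < g -> 0 <= potential g 0 0 r.
Proof.
  intros. rewrite potential_00 by auto. assert (0 < Rpower r g) by apply rp_pos.
  unfold Rdiv; apply Rmult_le_pos; [lra| apply Rlt_le, Rinv_0_lt_compat; lra].
Qed.

Lemma energy_identity g al A B r rx rt u ux ut uxx : 0 < r -> 1 < g ->
  rt = - (rx * u + r * ux) ->
  rt * u + r * ut + (rx * u ^ 2 + r * (2 * u * ux)) + g * Rpower r (g - 1) * rx
     = al * Rpower r (al - 1) * rx * ux + Rpower r al * uxx ->
  energy_dens_t g B r rt u ut + energy_flux_x g al A B r rx u ux uxx = - (Rpower r al * ux ^ 2).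
Proof.
  intros Hr Hg Hrt Hm. unfold energy_dens_t, energy_flux_x, dpotential, potential in *.
  rewrite !rp_m1 in * by auto.
  set (P := Rpower r al) in *. set (Q := Rpower r g) in *.
  assert (HW : r * ut = al * (P / r) * rx * ux + P * uxx - rt * u - (rx * u ^ 2 + r * (2 * u * ux)) - g * (Q / r) * rx) by lra.
  replace ut with ((r * ut) / r) by (field; lra). rewrite HW. rewrite Hrt.
  field. lra.
Qed.

Lemma bd_identity g al A B r rx rt rxx rxt u ux ut uxx : 0 < r -> 1 < g ->
  rt = - (rx * u + r * ux) ->
  rxt = - (rxx * u + 2 * rx * ux + r * uxx) ->
  rt * u + r * ut + (rx * u ^ 2 + r * (2 * u * ux)) + g * Rpower r (g - 1) * rx
     = al * Rpower r (al - 1) * rx * ux + Rpower r al * uxx ->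
  bd_dens_t g al B r rx rt rxt u ut + bd_flux_x g al A B r rx rxx u ux
    = - (g * Rpower r (g - 1) * rx * bd_vel al r rx).
Proof.
  intros Hr Hg Hrt Hrxt Hm. unfold bd_dens_t, bd_flux_x, bd_vel, dpotential, potential in *.
  rewrite ?rp_m1, ?rp_m2, ?rp_m3 in * by auto.
  set (P := Rpower r al) in *. set (Q := Rpower r g) in *.
  assert (HW : r * ut = al * (P / r) * rx * ux + P * uxx - rt * u - (rx * u ^ 2 + r * (2 * u * ux)) - g * (Q / r) * rx) by lra.
  replace ut with ((r * ut) / r) by (field; lra). rewrite HW. rewrite Hrxt, Hrt.
  field. lra.
Qed.

Lemma bd_dissipation_nonneg g al r rx : 0 < g -> 0 < r -> 0 <= g * Rpower r (g - 1) * rx * bd_vel al r rx.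
Proof.
  intros Hg Hr. unfold bd_vel.
  replace (g * Rpower r (g - 1) * rx * (Rpower r (al - 2) * rx))
    with (g * Rpower r (g - 1) * Rpower r (al - 2) * rx ^ 2) by ring.
  apply Rmult_le_pos; [|apply pow2_ge_0].
  apply Rmult_le_pos; [apply Rmult_le_pos|]; [lra| |]; left; apply rp_pos.
Qed.

Ltac clamp_continuity HD Hab HX HT :=
  repeat match goal with
  | H : cont_on _ ?f |- _ =>
      let C := fresh "C" in
      pose proof (cont_on_clamped _ _ _ HD f _ _ Hab HT HX H) as C; clear H
  end.

Lemma energy_inequality (D : R -> R -> Prop) X T g al A B a b r rx rt rxx rxt u ux ut uxx eps :
  (forall x t, D x t <-> X x /\ 0 <= t <= T) -> a < b -> 0 < T ->
  (forall y, a <= y <= b -> X y) -> 1 < g ->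
  regular_solution X T g al r rx rt rxx rxt u ux ut uxx ->
  cont_on D r -> cont_on D rx -> cont_on D rt -> cont_on D u -> cont_on D ux -> cont_on D ut -> cont_on D uxx ->
  (forall t, 0 < t < T -> energy_flux g al A B (r a t) (u a t) (ux a t) - energy_flux g al A B (r b t) (u b t) (ux b t) <= eps) ->
  forall t, 0 <= t <= T ->
    RInt (fun x => energy_dens g A B (r x t) (u x t)) a b <= RInt (fun x => energy_dens g A B (r x 0) (u x 0)) a b + eps * t.
Proof.
  intros HD Hab HT HX Hg HG Cr Crx Crt Cu Cux Cut Cuxx Hflux.
  assert (Pr : forall x t, 0 < r (clamp a b x) (clamp 0 T t)).
  { intros. apply (rs_pos HG); [apply HX|]; apply clamp_in; lra. }
  clamp_continuity HD Hab HX HT.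
  assert (Hg1 : g - 1 <> 0) by lra.
  apply (energy_balance (fun x t => energy_dens g A B (r x t) (u x t)) (fun x t => energy_dens_t g B (r x t) (rt x t) (u x t) (ut x t))
    (fun x t => energy_flux g al A B (r x t) (u x t) (ux x t)) (fun x t => energy_flux_x g al A B (r x t) (rx x t) (u x t) (ux x t) (uxx x t))
    a b T eps); auto.
  - intros; cbv beta; unfold energy_dens, potential; solve_cont2d.
  - intros; cbv beta; unfold energy_dens_t, dpotential; solve_cont2d.
  - intros t Ht; apply (c2d_cont_ab (fun x t => energy_flux g al A B (r x t) (u x t) (ux x t)) a b T t); [lra|lra|].
    intros; cbv beta; unfold energy_flux, potential; solve_cont2d.
  - intros t Ht; apply (c2d_cont_ab (fun x t => energy_flux_x g al A B (r x t) (rx x t) (u x t) (ux x t) (uxx x t)) a b T t); [lra|lra|].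
    intros; cbv beta; unfold energy_flux_x, dpotential, potential; solve_cont2d.
  - intros x t Hx Ht. destruct (rs_dt HG x t (HX x Hx) Ht) as [T1 [T2 T3]].
    assert (Hr : 0 < r x t) by (apply (rs_pos HG); auto; lra).
    unfold energy_dens, energy_dens_t, potential, dpotential. eapply dpl_eq; [solve_derive|]. simpl. field. exact Hg1.
  - intros x t Hx Ht.
    assert (Hxi := interior_pt_of_interval X a b x HX Hx).
    destruct (rs_dx HG x t Hxi ltac:(lra)) as [D1 [D2 [D3 D4]]].
    assert (Hr : 0 < r x t) by (apply (rs_pos HG); [apply HX|]; lra).
    unfold energy_flux, energy_flux_x, potential, dpotential. eapply dpl_eq; [solve_derive|]. simpl. field. exact Hg1.
  - intros x t Hx Ht.
    assert (Hxi := interior_pt_of_interval X a b x HX Hx).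
    assert (Hr : 0 < r x t) by (apply (rs_pos HG); [apply HX|]; lra).
    rewrite (energy_identity g al A B _ _ _ _ _ _ _ Hr Hg).
    + assert (0 <= Rpower (r x t) al * ux x t ^ 2) by (apply Rmult_le_pos; [left; apply rp_pos| apply pow2_ge_0]). lra.
    + apply (rs_mass HG); auto.
    + apply (rs_momentum HG); auto.
Qed.

Lemma bd_inequality (D : R -> R -> Prop) X T g al A B a b r rx rt rxx rxt u ux ut uxx eps :
  (forall x t, D x t <-> X x /\ 0 <= t <= T) -> a < b -> 0 < T ->
  (forall y, a <= y <= b -> X y) -> 1 < g ->
  regular_solution X T g al r rx rt rxx rxt u ux ut uxx ->
  cont_on D r -> cont_on D rx -> cont_on D rt -> cont_on D rxx -> cont_on D rxt ->
  cont_on D u -> cont_on D ux -> cont_on D ut ->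
  (forall t, 0 < t < T -> bd_flux g al A B (r a t) (rx a t) (u a t) - bd_flux g al A B (r b t) (rx b t) (u b t) <= eps) ->
  forall t, 0 <= t <= T ->
    RInt (fun x => bd_dens g al A B (r x t) (rx x t) (u x t)) a b
      <= RInt (fun x => bd_dens g al A B (r x 0) (rx x 0) (u x 0)) a b + eps * t.
Proof.
  intros HD Hab HT HX Hg HG Cr Crx Crt Crxx Crxt Cu Cux Cut Hflux.
  assert (Pr : forall x t, 0 < r (clamp a b x) (clamp 0 T t)).
  { intros. apply (rs_pos HG); [apply HX|]; apply clamp_in; lra. }
  clamp_continuity HD Hab HX HT.
  assert (Hg1 : g - 1 <> 0) by lra.
  apply (energy_balance (fun x t => bd_dens g al A B (r x t) (rx x t) (u x t))
    (fun x t => bd_dens_t g al B (r x t) (rx x t) (rt x t) (rxt x t) (u x t) (ut x t))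
    (fun x t => bd_flux g al A B (r x t) (rx x t) (u x t))
    (fun x t => bd_flux_x g al A B (r x t) (rx x t) (rxx x t) (u x t) (ux x t))
    a b T eps); auto.
  - intros; cbv beta; unfold bd_dens, bd_vel, potential; solve_cont2d.
  - intros; cbv beta; unfold bd_dens_t, bd_vel, dpotential; solve_cont2d.
  - intros t Ht; apply (c2d_cont_ab (fun x t => bd_flux g al A B (r x t) (rx x t) (u x t)) a b T t); [lra|lra|].
    intros; cbv beta; unfold bd_flux, bd_vel, potential; solve_cont2d.
  - intros t Ht; apply (c2d_cont_ab (fun x t => bd_flux_x g al A B (r x t) (rx x t) (rxx x t) (u x t) (ux x t)) a b T t); [lra|lra|].
    intros; cbv beta; unfold bd_flux_x, bd_vel, dpotential, potential; solve_cont2d.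
  - intros x t Hx Ht. destruct (rs_dt HG x t (HX x Hx) Ht) as [T1 [T2 T3]].
    assert (Hr : 0 < r x t) by (apply (rs_pos HG); auto; lra).
    unfold bd_dens, bd_dens_t, bd_vel, potential, dpotential. eapply dpl_eq; [solve_derive|].
    replace (al - 2 - 1) with (al - 3) by ring. simpl. field. exact Hg1.
  - intros x t Hx Ht. assert (Hxi := interior_pt_of_interval X a b x HX Hx).
    destruct (rs_dx HG x t Hxi ltac:(lra)) as [D1 [D2 [D3 D4]]].
    assert (Hr : 0 < r x t) by (apply (rs_pos HG); [apply HX|]; lra).
    unfold bd_flux, bd_flux_x, bd_vel, potential, dpotential. eapply dpl_eq; [solve_derive|].
    replace (al - 2 - 1) with (al - 3) by ring. simpl. field. exact Hg1.
  - intros x t Hx Ht. assert (Hxi := interior_pt_of_interval X a b x HX Hx).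
    assert (Hr : 0 < r x t) by (apply (rs_pos HG); [apply HX|]; lra).
    cbv beta. rewrite (bd_identity g al A B (r x t) (rx x t) (rt x t) (rxx x t) (rxt x t) (u x t) (ux x t) (ut x t) (uxx x t) Hr Hg).
    + assert (H := bd_dissipation_nonneg g al (r x t) (rx x t) ltac:(lra) Hr). lra.
    + apply (rs_mass HG); auto.
    + apply (rs_mass_x HG); auto.
    + apply (rs_momentum HG); auto.
Qed.

(* Mass balance (with a sign sg, so that both inequalities give conservation). *)
Lemma mass_inequality (D : R -> R -> Prop) X T g al a b r rx rt rxx rxt u ux ut uxx sg eps :
  (forall x t, D x t <-> X x /\ 0 <= t <= T) -> a < b -> 0 < T ->
  (forall y, a <= y <= b -> X y) ->
  regular_solution X T g al r rx rt rxx rxt u ux ut uxx ->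
  cont_on D r -> cont_on D rx -> cont_on D rt -> cont_on D u -> cont_on D ux ->
  (forall t, 0 < t < T -> sg * (r a t * u a t) - sg * (r b t * u b t) <= eps) ->
  forall t, 0 <= t <= T ->
    RInt (fun x => sg * r x t) a b <= RInt (fun x => sg * r x 0) a b + eps * t.
Proof.
  intros HD Hab HT HX HG Cr Crx Crt Cu Cux Hflux.
  clamp_continuity HD Hab HX HT.
  apply (energy_balance (fun x t => sg * r x t) (fun x t => sg * rt x t)
    (fun x t => sg * (r x t * u x t)) (fun x t => sg * (rx x t * u x t + r x t * ux x t))
    a b T eps); auto.
  - intros; cbv beta; solve_cont2d.
  - intros; cbv beta; solve_cont2d.
  - intros t Ht; apply (c2d_cont_ab (fun x t => sg * (r x t * u x t)) a b T t); [lra|lra|].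
    intros; cbv beta; solve_cont2d.
  - intros t Ht; apply (c2d_cont_ab (fun x t => sg * (rx x t * u x t + r x t * ux x t)) a b T t); [lra|lra|].
    intros; cbv beta; solve_cont2d.
  - intros x t Hx Ht. destruct (rs_dt HG x t (HX x Hx) Ht) as [T1 [T2 T3]].
    eapply dpl_eq; [solve_derive|]. ring.
  - intros x t Hx Ht. assert (Hxi := interior_pt_of_interval X a b x HX Hx).
    destruct (rs_dx HG x t Hxi ltac:(lra)) as [D1 [D2 [D3 D4]]].
    eapply dpl_eq; [solve_derive|]. ring.
  - intros x t Hx Ht. assert (Hxi := interior_pt_of_interval X a b x HX Hx).
    rewrite (rs_mass HG); auto. lra.
Qed.

Lemma energy_dens_nonneg g A B r u : 0 < r -> 0 <= potential g A B r -> 0 <= energy_dens g A B r u.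
Proof. intros. unfold energy_dens. assert (0 <= r * u ^ 2 / 2) by (assert (0 <= u ^ 2) by apply pow2_ge_0; unfold Rdiv; apply Rmult_le_pos; [apply Rmult_le_pos|]; lra). lra. Qed.

Lemma bd_dens_nonneg g al A B r rx u : 0 < r -> 0 <= potential g A B r -> 0 <= bd_dens g al A B r rx u.
Proof.
  intros. unfold bd_dens. set (v := u + bd_vel al r rx).
  assert (0 <= r * v ^ 2 / 2) by (assert (0 <= v ^ 2) by apply pow2_ge_0; unfold Rdiv; apply Rmult_le_pos; [apply Rmult_le_pos|]; lra). lra.
Qed.


Lemma potential_le_energy_dens g A B r u : 0 < r -> potential g A B r <= energy_dens g A B r u.
Proof.
  intros. unfold energy_dens.
  assert (0 <= r * u ^ 2 / 2) by (assert (0 <= u ^ 2) by apply pow2_ge_0; unfold Rdiv; apply Rmult_le_pos; [apply Rmult_le_pos|]; lra).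
  lra.
Qed.

(** * Hölder estimate for z = rho^(alpha - 1/2) *)

Definition z_x al r rx := (al - / 2) * Rpower r (al - / 2 - 1) * rx.

(* Cauchy-Schwarz applied to z(y) - z(x) = ∫_x^y z_x. *)
Lemma z_oscillation (D : R -> R -> Prop) X T g al a b r rx rt rxx rxt u ux ut uxx t x y :
  (forall x t, D x t <-> X x /\ 0 <= t <= T) -> a < b -> 0 < T ->
  (forall y, a <= y <= b -> X y) ->
  regular_solution X T g al r rx rt rxx rxt u ux ut uxx ->
  cont_on D r -> cont_on D rx -> 0 <= t <= T -> a <= x -> x <= y -> y <= b ->
  (Rpower (r y t) (al - / 2) - Rpower (r x t) (al - / 2)) ^ 2
    <= (y - x) * RInt (fun s => z_x al (r s t) (rx s t) ^ 2) x y.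
Proof.
  intros HD Hab HT HX HG Cr Crx Ht Hax Hxy Hyb.
  assert (Pr : forall x t, 0 < r (clamp a b x) (clamp 0 T t)).
  { intros. apply (rs_pos HG); [apply HX|]; apply clamp_in; lra. }
  clamp_continuity HD Hab HX HT.
  assert (Cz : cont_ab a b (fun s => Rpower (r s t) (al - / 2))).
  { apply (c2d_cont_ab (fun s t => Rpower (r s t) (al - / 2)) a b T t); [lra| lra|]. intros; cbv beta; solve_cont2d. }
  assert (Czx : cont_ab a b (fun s => z_x al (r s t) (rx s t))).
  { apply (c2d_cont_ab (fun s t => z_x al (r s t) (rx s t)) a b T t); [lra| lra|]. intros; cbv beta; unfold z_x; solve_cont2d. }
  assert (Czx2 : cont_ab a b (fun s => z_x al (r s t) (rx s t) ^ 2)).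
  { apply (c2d_cont_ab (fun s t => z_x al (r s t) (rx s t) ^ 2) a b T t); [lra| lra|]. intros; cbv beta; unfold z_x; solve_cont2d. }
  rewrite <- (ftc_interval x y (fun s => Rpower (r s t) (al - / 2)) (fun s => z_x al (r s t) (rx s t))); auto.
  - apply RInt_cauchy_schwarz; auto.
    + apply (cont_ab_ex_RInt_sub a b); auto; lra.
    + apply (cont_ab_ex_RInt_sub a b); auto; lra.
  - apply (cont_ab_sub a b); auto.
  - apply (cont_ab_sub a b); auto.
  - intros s Hs. assert (Hxi := interior_pt_of_interval X a b s HX ltac:(lra)).
    destruct (rs_dx HG s t Hxi Ht) as [D1 _].
    assert (Hr : 0 < r s t) by (apply (rs_pos HG); [apply HX; lra| lra]).
    unfold z_x. eapply dpl_eq; [solve_derive|]. ring.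
Qed.

Lemma z_x_sq al r rx : 0 < r -> z_x al r rx ^ 2 = (al - / 2) ^ 2 * (r * bd_vel al r rx ^ 2).
Proof.
  intros Hr. unfold z_x, bd_vel.
  assert (E : Rpower r (al - / 2 - 1) ^ 2 = r * Rpower r (al - 2) ^ 2).
  { rewrite <- !rp_sq. replace (2 * (al - / 2 - 1)) with (1 + 2 * (al - 2)) by field.
    rewrite Rpower_plus, Rpower_1 by auto. reflexivity. }
  replace (((al - / 2) * Rpower r (al - / 2 - 1) * rx) ^ 2)
    with ((al - / 2) ^ 2 * Rpower r (al - / 2 - 1) ^ 2 * rx ^ 2) by ring.
  rewrite E. ring.
Qed.

(* Pointwise, z_x^2 is controlled by energy plus BD entropy densities
   (since r w^2 <= 2 r (u + w)^2 + 2 r u^2 and (al - 1/2)^2 <= 1/4). *)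
Lemma z_x_sq_le al g A B r rx u : 0 < al < / 2 -> 0 < r -> 0 <= potential g A B r ->
  z_x al r rx ^ 2 <= energy_dens g A B r u + bd_dens g al A B r rx u.
Proof.
  intros Hal Hr HG. unfold energy_dens, bd_dens. rewrite z_x_sq by auto.
  set (w := bd_vel al r rx).
  assert (Hw : w ^ 2 <= 2 * (u + w) ^ 2 + 2 * u ^ 2) by (assert (0 <= (2 * u + w) ^ 2) by apply pow2_ge_0; nra).
  assert (Hc : (al - / 2) ^ 2 <= / 4) by nra.
  assert (Hc0 : 0 <= (al - / 2) ^ 2) by nra.
  assert (0 <= r * w ^ 2) by nra.
  assert ((al - / 2) ^ 2 * (r * w ^ 2) <= / 4 * (r * w ^ 2)) by nra.
  assert (r * w ^ 2 <= r * (2 * (u + w) ^ 2 + 2 * u ^ 2)) by (apply Rmult_le_compat_l; lra).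
  nra.
Qed.

(* Conversely the BD density is controlled by r u^2 + z_x^2 + G: this bounds
   the initial BD entropy by the initial quantity E0 of the theorem. *)
Lemma bd_dens_initial g al A B r rx u : 0 < al < / 2 -> 0 < r -> 0 <= potential g A B r ->
  bd_dens g al A B r rx u
    <= (1 + / (al - / 2) ^ 2) * (r * u ^ 2 + z_x al r rx ^ 2 + potential g A B r).
Proof.
  intros Hal Hr HG. unfold bd_dens. rewrite z_x_sq by auto.
  set (w := bd_vel al r rx). set (c := (al - / 2) ^ 2).
  assert (Hc : 0 < c) by (unfold c; replace ((al - / 2) ^ 2) with ((/ 2 - al) ^ 2) by ring; apply pow_lt; lra).
  assert (Hw : (u + w) ^ 2 <= 2 * u ^ 2 + 2 * w ^ 2) by (assert (0 <= (u - w) ^ 2) by apply pow2_ge_0; nra).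
  assert (H1 : r * (u + w) ^ 2 / 2 <= r * u ^ 2 + r * w ^ 2).
  { assert (r * (u + w) ^ 2 <= r * (2 * u ^ 2 + 2 * w ^ 2)) by (apply Rmult_le_compat_l; lra). lra. }
  assert (Hu : 0 <= r * u ^ 2) by (apply Rmult_le_pos; [lra| apply pow2_ge_0]).
  assert (Hw2 : 0 <= r * w ^ 2) by (apply Rmult_le_pos; [lra| apply pow2_ge_0]).
  assert (Hic : 0 < / c) by (apply Rinv_0_lt_compat; auto).
  assert (E2 : r * w ^ 2 = / c * (c * (r * w ^ 2))) by (field; lra).
  assert (Hcrw : 0 <= c * (r * w ^ 2)) by (apply Rmult_le_pos; lra).
  assert (/ c * (c * (r * w ^ 2)) <= (1 + / c) * (c * (r * w ^ 2))) by (apply Rmult_le_compat_r; lra).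
  assert (r * u ^ 2 <= (1 + / c) * (r * u ^ 2)) by (assert (0 <= / c * (r * u ^ 2)) by (apply Rmult_le_pos; lra); lra).
  assert (potential g A B r <= (1 + / c) * potential g A B r)
    by (assert (0 <= / c * potential g A B r) by (apply Rmult_le_pos; lra); lra).
  lra.
Qed.

Lemma holder_sym (P : R -> Prop) (f : R -> R) K :
  (forall x y, P x -> P y -> x <= y -> (f y - f x) ^ 2 <= (y - x) * K) ->
  forall x y, P x -> P y -> (f y - f x) ^ 2 <= Rabs (y - x) * K.
Proof.
  intros H x y Hx Hy. destruct (Rle_dec x y).
  - rewrite Rabs_right by lra. auto.
  - rewrite Rabs_left by lra. replace (- (y - x)) with (x - y) by ring.
    replace ((f y - f x) ^ 2) with ((f x - f y) ^ 2) by ring. apply H; auto; lra.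
Qed.

Lemma z_holder (D : R -> R -> Prop) X T g al A B a b r rx rt rxx rxt u ux ut uxx t K :
  (forall x t, D x t <-> X x /\ 0 <= t <= T) -> a < b -> 0 < T ->
  (forall y, a <= y <= b -> X y) -> 0 < al < / 2 ->
  regular_solution X T g al r rx rt rxx rxt u ux ut uxx ->
  cont_on D r -> cont_on D rx -> cont_on D u -> 0 <= t <= T ->
  (forall x, a <= x <= b -> 0 <= potential g A B (r x t)) ->
  (forall c d, a <= c -> c <= d -> d <= b ->
     RInt (fun x => energy_dens g A B (r x t) (u x t)) c d <= K /\
     RInt (fun x => bd_dens g al A B (r x t) (rx x t) (u x t)) c d <= K) ->
  forall x y, a <= x <= b -> a <= y <= b ->
    (Rpower (r y t) (al - / 2) - Rpower (r x t) (al - / 2)) ^ 2 <= Rabs (y - x) * (2 * K).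
Proof.
  intros HD Hab HT HX Hal HG Cr Crx Cu Ht HGf Hbound.
  apply (holder_sym (fun x => a <= x <= b) (fun x => Rpower (r x t) (al - / 2))).
  intros x y Hx Hy Hxy.
  assert (Hr : forall s, x <= s <= y -> 0 < r s t) by (intros; apply (rs_pos HG); [apply HX|]; lra).
  assert (Pr : forall x t, 0 < r (clamp a b x) (clamp 0 T t)).
  { intros. apply (rs_pos HG); [apply HX|]; apply clamp_in; lra. }
  assert (Hcab : forall F : R -> R -> R,
    (forall x t, continuity_2d_pt (fun x t => F (clamp a b x) (clamp 0 T t)) x t) ->
    ex_RInt (fun s => F s t) x y).
  { intros F HF. apply (cont_ab_ex_RInt_sub a b); [lra| lra|]. apply (c2d_cont_ab F a b T); auto; lra. }
  assert (C1 := cont_on_clamped _ _ _ HD r _ _ Hab HT HX Cr).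
  assert (C2 := cont_on_clamped _ _ _ HD rx _ _ Hab HT HX Crx).
  assert (C3 := cont_on_clamped _ _ _ HD u _ _ Hab HT HX Cu).
  assert (Hen : ex_RInt (fun s => energy_dens g A B (r s t) (u s t)) x y).
  { apply (Hcab (fun s t => energy_dens g A B (r s t) (u s t))). intros; cbv beta; unfold energy_dens, potential; solve_cont2d. }
  assert (Hbd : ex_RInt (fun s => bd_dens g al A B (r s t) (rx s t) (u s t)) x y).
  { apply (Hcab (fun s t => bd_dens g al A B (r s t) (rx s t) (u s t))). intros; cbv beta; unfold bd_dens, bd_vel, potential; solve_cont2d. }
  assert (Hz : ex_RInt (fun s => z_x al (r s t) (rx s t) ^ 2) x y).
  { apply (Hcab (fun s t => z_x al (r s t) (rx s t) ^ 2)). intros; cbv beta; unfold z_x; solve_cont2d. }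
  eapply Rle_trans; [apply (z_oscillation D X T g al a b r rx rt rxx rxt u ux ut uxx); auto; lra|].
  apply Rmult_le_compat_l; [lra|].
  apply Rle_trans with (RInt (fun s => plus (energy_dens g A B (r s t) (u s t))
                                            (bd_dens g al A B (r s t) (rx s t) (u s t))) x y).
  - apply RInt_le; auto; [apply (@ex_RInt_plus R_NormedModule); auto|].
    intros s Hs. apply z_x_sq_le; auto; [apply Hr; lra| apply HGf; lra].
  - rewrite (@RInt_plus R_CompleteNormedModule) by auto. unfold plus; simpl.
    destruct (Hbound x y ltac:(lra) Hxy ltac:(lra)) as [E1 E2]; lra.
Qed.

Lemma q_is_z_x (D : R -> R -> Prop) X T g al r rx rt rxx rxt u ux ut uxx q x t :
  (forall x t, D x t <-> X x /\ 0 <= t <= T) ->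
  regular_solution X T g al r rx rt rxx rxt u ux ut uxx ->
  (forall x t, D x t -> pdx D (fun y s => Rpower (r y s) (al - / 2)) x t (q x t)) ->
  interior_pt X x -> 0 <= t <= T -> q x t = z_x al (r x t) (rx x t).
Proof.
  intros HD HG Hq Hx Ht. eapply uniqueness_limite.
  - apply (pdx_derivable D X T HD (fun y s => Rpower (r y s) (al - / 2)) x t); auto.
    apply Hq, HD. split; [apply interior_pt_elim|]; auto.
  - destruct (rs_dx HG x t Hx Ht) as [D1 _].
    assert (Hr : 0 < r x t) by (apply (rs_pos HG); [apply interior_pt_elim|]; auto).
    unfold z_x. eapply dpl_eq; [solve_derive|]. ring.
Qed.

(** * From the Hölder estimate to pointwise bounds *)

(* Throughout, z = rho^(-be) with be > 0 satisfies (z(y) - z(x))^2 <= |y - x| B2.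
   Near x0, at distance <= rho(x0)^(-2 be)/B2 (resp. a quarter of it), z varies by
   at most z(x0) (resp. z(x0)/2), so rho stays >= 2^(-1/be) rho(x0)
   (resp. <= 2^(1/be) rho(x0)). *)
Lemma z_near_lower (X : R -> Prop) (rho : R -> R) be B2 x0 y :
  0 < be -> 0 < B2 -> (forall y, X y -> 0 < rho y) ->
  (forall x y, X x -> X y -> (Rpower (rho y) (- be) - Rpower (rho x) (- be)) ^ 2 <= Rabs (y - x) * B2) ->
  X x0 -> X y -> Rabs (y - x0) <= Rpower (rho x0) (- (2 * be)) / B2 ->
  Rpower 2 (- / be) * rho x0 <= rho y.
Proof.
  intros Hbe HB2 Hpos HZ Hx0 Hy Hd.
  set (z0 := Rpower (rho x0) (- be)). set (zy := Rpower (rho y) (- be)).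
  assert (Hz0 : 0 < z0) by apply rp_pos. assert (Hzy : 0 < zy) by apply rp_pos.
  assert (H1 : (zy - z0) ^ 2 <= z0 ^ 2).
  { eapply Rle_trans; [apply HZ; auto|].
    unfold z0. rewrite <- rp_sq. replace (2 * - be) with (- (2 * be)) by ring.
    apply Rmult_le_reg_r with (/ B2); [apply Rinv_0_lt_compat; auto|].
    rewrite Rmult_assoc, Rinv_r, Rmult_1_r by lra. exact Hd. }
  assert (H2 : zy <= 2 * z0) by nra.
  rewrite <- (rp_neg_inv (rho y) be), <- (rp_neg_inv (rho x0) be) by auto. fold z0 zy.
  rewrite <- rp_mul by lra.
  apply rp_le_decr; [lra|]. assert (0 < / be) by (apply Rinv_0_lt_compat; auto). lra.
Qed.

Lemma z_near_upper (X : R -> Prop) (rho : R -> R) be B2 x0 y :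
  0 < be -> 0 < B2 -> (forall y, X y -> 0 < rho y) ->
  (forall x y, X x -> X y -> (Rpower (rho y) (- be) - Rpower (rho x) (- be)) ^ 2 <= Rabs (y - x) * B2) ->
  X x0 -> X y -> Rabs (y - x0) <= Rpower (rho x0) (- (2 * be)) / (4 * B2) ->
  rho y <= Rpower 2 (/ be) * rho x0.
Proof.
  intros Hbe HB2 Hpos HZ Hx0 Hy Hd.
  set (z0 := Rpower (rho x0) (- be)). set (zy := Rpower (rho y) (- be)).
  assert (Hz0 : 0 < z0) by apply rp_pos. assert (Hzy : 0 < zy) by apply rp_pos.
  assert (H1 : (zy - z0) ^ 2 <= (z0 / 2) ^ 2).
  { eapply Rle_trans; [apply HZ; auto|].
    replace ((z0 / 2) ^ 2) with (z0 ^ 2 / 4) by field.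
    unfold z0. rewrite <- rp_sq. replace (2 * - be) with (- (2 * be)) by ring.
    apply Rmult_le_reg_r with (/ B2); [apply Rinv_0_lt_compat; auto|].
    rewrite Rmult_assoc, Rinv_r, Rmult_1_r by lra.
    replace (Rpower (rho x0) (- (2 * be)) / 4 * / B2) with (Rpower (rho x0) (- (2 * be)) / (4 * B2)) by (field; lra).
    exact Hd. }
  assert (H2 : z0 / 2 <= zy) by nra.
  rewrite <- (rp_neg_inv (rho y) be), <- (rp_neg_inv (rho x0) be) by auto. fold z0 zy.
  replace (Rpower 2 (/ be)) with (Rpower (/ 2) (- / be)).
  2: { rewrite Rpower_Ropp. unfold Rpower. rewrite ln_Rinv by lra. rewrite <- exp_Ropp. f_equal. ring. }
  rewrite <- rp_mul by lra.
  apply rp_le_decr; [lra|]. assert (0 < / be) by (apply Rinv_0_lt_compat; auto). lra.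
Qed.

(* The density level beyond which rho cannot go: above it, the bump of rho
   near the maximum would carry more potential energy than B1. *)
Definition rho_cap g be B1 B2 := Rpower (2 * (g - 1) * B1 * B2 * Rpower 2 (g / be)) (/ (g - 2 * be)).

Lemma upper_from_local_mass be g B1 B2 K :
  0 < be -> 1 < g -> 0 < g - 2 * be -> 0 < B1 -> 0 < B2 -> 0 < K ->
  Rpower (Rpower 2 (- / be) * K) g / (2 * (g - 1)) * (Rpower K (- (2 * be)) / B2) <= B1 ->
  K <= rho_cap g be B1 B2.
Proof.
  intros Hbe Hg Hgb HB1 HB2 HK Hm.
  set (c2 := Rpower 2 (- / be)) in *. assert (Hc2 : 0 < c2) by apply rp_pos.
  rewrite rp_mul in Hm by lra.
  assert (Hc2g : Rpower c2 g * Rpower 2 (g / be) = 1).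
  { unfold c2. rewrite Rpower_mult, <- Rpower_plus. replace (- / be * g + g / be) with 0 by (field; lra).
    apply Rpower_O; lra. }
  assert (HKe : Rpower K g * Rpower K (- (2 * be)) = Rpower K (g - 2 * be)).
  { rewrite <- Rpower_plus. f_equal; ring. }
  assert (HCg : 0 < Rpower c2 g) by apply rp_pos.
  assert (H2g : 0 < Rpower 2 (g / be)) by apply rp_pos.
  unfold rho_cap. apply rp_root_le; [exact HK| repeat apply Rmult_lt_0_compat; try lra; apply rp_pos | lra |].
  rewrite <- HKe.
  replace (Rpower c2 g * Rpower K g / (2 * (g - 1)) * (Rpower K (- (2 * be)) / B2))
    with (Rpower c2 g * (Rpower K g * Rpower K (- (2 * be))) / (2 * (g - 1) * B2)) in Hm by (field; lra).
  apply Rmult_le_compat_r with (r := 2 * (g - 1) * B2 * Rpower 2 (g / be)) in Hm;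
    [|left; repeat apply Rmult_lt_0_compat; lra].
  replace (Rpower c2 g * (Rpower K g * Rpower K (- (2 * be))) / (2 * (g - 1) * B2) * (2 * (g - 1) * B2 * Rpower 2 (g / be)))
    with ((Rpower c2 g * Rpower 2 (g / be)) * (Rpower K g * Rpower K (- (2 * be)))) in Hm by (field; lra).
  rewrite Hc2g in Hm. lra.
Qed.

(* Whole line, upper bound: either rho(x0) is below 2^(1/be) rstar, or rho is
   >= rstar near x0, where the potential G is >= r^g/(2(g-1)). *)
Lemma upper_bound_line (rho Gfun : R -> R) be g B1 B2 rstar x0 :
  0 < be -> 1 < g -> 0 < g - 2 * be -> 0 < B1 -> 0 < B2 -> 0 < rstar ->
  (forall y, 0 < rho y) ->
  (forall x y, (Rpower (rho y) (- be) - Rpower (rho x) (- be)) ^ 2 <= Rabs (y - x) * B2) ->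
  (forall r, rstar <= r -> Rpower r g / (2 * (g - 1)) <= Gfun r) ->
  (forall c d m, c <= d -> (forall y, c < y < d -> m <= Gfun (rho y)) -> m * (d - c) <= B1) ->
  rho x0 <= Rmax (rstar * Rpower 2 (/ be)) (rho_cap g be B1 B2).
Proof.
  intros Hbe Hg Hgb HB1 HB2 Hrs Hpos HZ HGf HG.
  set (K := rho x0). assert (HK : 0 < K) by apply Hpos.
  destruct (Rle_dec K (rstar * Rpower 2 (/ be))) as [Hle|Hgt].
  { eapply Rle_trans; [exact Hle| apply Rmax_l]. }
  apply Rnot_le_lt in Hgt.
  eapply Rle_trans; [|apply Rmax_r].
  set (del := Rpower K (- (2 * be)) / B2).
  assert (Hdel : 0 < del) by (unfold del; apply Rdiv_lt_0_compat; [apply rp_pos| lra]).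
  set (c2 := Rpower 2 (- / be)). assert (Hc2 : 0 < c2) by apply rp_pos.
  assert (Hnear : forall y, x0 < y < x0 + del -> c2 * K <= rho y).
  { intros y Hy. apply (z_near_lower (fun _ => True) rho be B2 x0 y); auto.
    rewrite Rabs_right by lra. unfold del in *. fold K. lra. }
  assert (Hstar : rstar <= c2 * K).
  { assert (H2 := rp_2inv be). fold c2 in H2.
    apply Rmult_lt_compat_l with (r := c2) in Hgt; auto.
    replace (c2 * (rstar * Rpower 2 (/ be))) with rstar in Hgt
      by (transitivity (rstar * (c2 * Rpower 2 (/ be))); [rewrite H2; ring| ring]). lra. }
  apply upper_from_local_mass; auto.
  replace (Rpower K (- (2 * be)) / B2) with (x0 + del - x0) by (unfold del; ring).
  apply HG; [lra|]. intros y Hy. fold c2.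
  eapply Rle_trans; [|apply HGf; eapply Rle_trans; [exact Hstar| apply Hnear; auto]].
  unfold Rdiv. apply Rmult_le_compat_r; [left; apply Rinv_0_lt_compat; lra|].
  apply rp_le_incr; [split; [nra| apply Hnear; auto]| lra].
Qed.

(* Whole line, lower bound: if rho(x0) < 2^(-1/be) rlow then rho <= rlow on an
   interval of length rho(x0)^(-2be)/(4 B2), where G(rho) >= m0 > 0; the
   potential energy bound B1 then bounds rho(x0)^(-2be). *)
Lemma lower_bound_line (rho Gfun : R -> R) be B1 B2 rlow m0 x0 :
  0 < be -> 0 < B1 -> 0 < B2 -> 0 < rlow -> 0 < m0 ->
  (forall y, 0 < rho y) ->
  (forall x y, (Rpower (rho y) (- be) - Rpower (rho x) (- be)) ^ 2 <= Rabs (y - x) * B2) ->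
  (forall r, 0 < r <= rlow -> m0 <= Gfun r) ->
  (forall c d m, c <= d -> (forall y, c < y < d -> m <= Gfun (rho y)) -> m * (d - c) <= B1) ->
  Rmin (Rpower 2 (- / be) * rlow) (Rpower (4 * B1 * B2 / m0) (- / (2 * be))) <= rho x0.
Proof.
  intros Hbe HB1 HB2 Hrl Hm0 Hpos HZ HGf HG.
  set (k := rho x0). assert (Hk : 0 < k) by apply Hpos.
  destruct (Rle_dec (Rpower 2 (- / be) * rlow) k) as [Hle|Hlt].
  { eapply Rle_trans; [apply Rmin_l| exact Hle]. }
  apply Rnot_le_lt in Hlt.
  eapply Rle_trans; [apply Rmin_r|].
  set (del := Rpower k (- (2 * be)) / (4 * B2)).
  assert (Hdel : 0 < del) by (unfold del; apply Rdiv_lt_0_compat; [apply rp_pos| lra]).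
  assert (Hnear : forall y, x0 < y < x0 + del -> rho y <= rlow).
  { intros y Hy. eapply Rle_trans.
    - apply (z_near_upper (fun _ => True) rho be B2 x0 y); auto.
      rewrite Rabs_right by lra. unfold del in *. fold k. lra.
    - assert (H2 := rp_2inv be). assert (0 < Rpower 2 (/ be)) by apply rp_pos.
      apply Rmult_lt_compat_l with (r := Rpower 2 (/ be)) in Hlt; auto.
      replace (Rpower 2 (/ be) * (Rpower 2 (- / be) * rlow)) with rlow in Hlt by (transitivity (rlow * (Rpower 2 (- / be) * Rpower 2 (/ be))); [rewrite H2; ring| ring]).
      fold k. lra. }
  assert (Hm : m0 * (x0 + del - x0) <= B1).
  { apply HG; [lra|]. intros y Hy. apply HGf. split; [apply Hpos| apply Hnear; auto]. }
  replace (x0 + del - x0) with del in Hm by ring. unfold del in Hm.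
  assert (Hke : Rpower k (- (2 * be)) <= 4 * B1 * B2 / m0).
  { apply Rmult_le_reg_l with (m0 / (4 * B2)); [apply Rdiv_lt_0_compat; lra|].
    replace (m0 / (4 * B2) * (4 * B1 * B2 / m0)) with B1 by (field; lra).
    replace (m0 / (4 * B2) * Rpower k (- (2 * be))) with (m0 * (Rpower k (- (2 * be)) / (4 * B2))) by (field; lra).
    exact Hm. }
  replace k with (Rpower (Rpower k (- (2 * be))) (- / (2 * be))).
  2: { apply rp_neg_inv; lra. }
  apply rp_le_decr; [split; [apply rp_pos| exact Hke]|].
  assert (0 < / (2 * be)) by (apply Rinv_0_lt_compat; lra). lra.
Qed.

Lemma upper_from_total_mass (rho : R -> R) g B1 M m0 k :
  1 < g -> 0 < B1 -> 0 < m0 -> 0 < k ->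
  (forall y, -M < y < M -> 0 < rho y /\ k <= rho y) ->
  (forall m, (forall y, -M < y < M -> m * rho y <= Rpower (rho y) g / (g - 1)) -> m * m0 <= B1) ->
  k <= Rpower ((g - 1) * B1 / m0) (/ (g - 1)).
Proof.
  intros Hg HB1 Hm0 Hk Hlow HGM.
  assert (Hm : Rpower k (g - 1) / (g - 1) * m0 <= B1).
  { apply HGM. intros y Hy. destruct (Hlow y Hy) as [Hr Hry].
    assert (Hp : Rpower k (g - 1) <= Rpower (rho y) (g - 1)) by (apply rp_le_incr; lra).
    assert (0 < / (g - 1)) by (apply Rinv_0_lt_compat; lra).
    assert (0 <= (Rpower (rho y) (g - 1) - Rpower k (g - 1)) * rho y * / (g - 1))
      by (repeat apply Rmult_le_pos; lra).
    replace (Rpower (rho y) g / (g - 1)) with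
      (Rpower k (g - 1) / (g - 1) * rho y + (Rpower (rho y) (g - 1) - Rpower k (g - 1)) * rho y * / (g - 1)).
    { lra. }
    rewrite (rp_m1 (rho y) g) by auto. field. split; lra. }
  apply rp_root_le; auto; [apply Rdiv_lt_0_compat; [apply Rmult_lt_0_compat|]; lra| lra|].
  apply Rmult_le_reg_r with (m0 / (g - 1)); [apply Rdiv_lt_0_compat; lra|].
  replace ((g - 1) * B1 / m0 * (m0 / (g - 1))) with B1 by (field; lra).
  replace (Rpower k (g - 1) * (m0 / (g - 1))) with (Rpower k (g - 1) / (g - 1) * m0) by (field; lra).
  exact Hm.
Qed.

(* Bounded interval, upper bound: with del = rho(x0)^(-2be)/B2, rho >= 2^(-1/be) rho(x0)
   within del of x0.  If [-M, M] is within del of x0, use the total mass;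
   otherwise use the potential energy of a subinterval of length del/2. *)
Lemma upper_bound_interval (rho : R -> R) be g B1 B2 M m0 x0 :
  0 < be -> 1 < g -> 0 < g - 2 * be -> 0 < B1 -> 0 < B2 -> 0 < M -> 0 < m0 ->
  (forall y, -M <= y <= M -> 0 < rho y) ->
  (forall x y, -M <= x <= M -> -M <= y <= M ->
     (Rpower (rho y) (- be) - Rpower (rho x) (- be)) ^ 2 <= Rabs (y - x) * B2) ->
  (forall c d m, -M <= c -> c <= d -> d <= M ->
     (forall y, c < y < d -> m <= Rpower (rho y) g / (g - 1)) -> m * (d - c) <= B1) ->
  (forall m, (forall y, -M < y < M -> m * rho y <= Rpower (rho y) g / (g - 1)) -> m * m0 <= B1) ->
  -M <= x0 <= M ->
  rho x0 <= Rmax (Rpower 2 (/ be) * Rpower ((g - 1) * B1 / m0) (/ (g - 1))) (rho_cap g be B1 B2).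
Proof.
  intros Hbe Hg Hgb HB1 HB2 HM Hm0 Hpos HZ HG HGM Hx0.
  set (K := rho x0). assert (HK : 0 < K) by (apply Hpos; auto).
  set (del := Rpower K (- (2 * be)) / B2).
  assert (Hdel : 0 < del) by (unfold del; apply Rdiv_lt_0_compat; [apply rp_pos| lra]).
  set (c2 := Rpower 2 (- / be)). assert (Hc2 : 0 < c2) by apply rp_pos.
  assert (Hnear : forall y, -M <= y <= M -> Rabs (y - x0) <= del -> c2 * K <= rho y).
  { intros y Hy Hyd. apply (z_near_lower (fun y => -M <= y <= M) rho be B2 x0 y); auto. }
  assert (HcK : 0 < c2 * K) by nra.
  destruct (Rle_dec (2 * M) del) as [Hc1|Hc1].
  - eapply Rle_trans; [|apply Rmax_l].
    assert (H2 := rp_2inv be). fold c2 in H2.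
    replace K with (Rpower 2 (/ be) * (c2 * K)) by (transitivity (K * (c2 * Rpower 2 (/ be))); [ring| rewrite H2; ring]).
    apply Rmult_le_compat_l; [left; apply rp_pos|].
    apply (upper_from_total_mass rho g B1 M m0); auto.
    intros y Hy. split; [apply Hpos; lra|]. apply Hnear; [lra| unfold Rabs; destruct Rcase_abs; lra].
  - apply Rnot_le_lt in Hc1. eapply Rle_trans; [|apply Rmax_r].
    assert (Hint : exists c, -M <= c /\ c + del / 2 <= M /\ forall y, c <= y <= c + del / 2 -> Rabs (y - x0) <= del).
    { destruct (Rle_dec (x0 + del / 2) M).
      - exists x0. split; [lra| split; [lra|]]. intros y Hy. rewrite Rabs_right by lra. lra.
      - exists (x0 - del / 2). split; [lra| split; [lra|]]. intros y Hy. unfold Rabs; destruct Rcase_abs; lra. }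
    destruct Hint as [c [Hc [Hcd Hcy]]].
    apply upper_from_local_mass; auto. fold c2.
    replace (Rpower (c2 * K) g / (2 * (g - 1)) * (Rpower K (- (2 * be)) / B2))
      with (Rpower (c2 * K) g / (g - 1) * (c + del / 2 - c)) by (unfold del; field; lra).
    apply HG; auto; [lra|]. intros y Hy.
    assert (Hry : c2 * K <= rho y) by (apply Hnear; [lra| apply Hcy; lra]).
    unfold Rdiv. apply Rmult_le_compat_r; [left; apply Rinv_0_lt_compat; lra|].
    apply rp_le_incr; lra.
Qed.

(* Bounded interval, lower bound: z is Hölder on [-M, M] and rho(ys) >= m0/(2M)
   at some point ys (the mean value of rho), so z <= (m0/(2M))^(-be) + sqrt(2 M B2). *)
Lemma lower_bound_interval (rho : R -> R) be B2 M m0 x0 ys :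
  0 < be -> 0 < B2 -> 0 < M -> 0 < m0 ->
  (forall y, -M <= y <= M -> 0 < rho y) ->
  (forall x y, -M <= x <= M -> -M <= y <= M ->
     (Rpower (rho y) (- be) - Rpower (rho x) (- be)) ^ 2 <= Rabs (y - x) * B2) ->
  -M <= ys <= M -> m0 / (2 * M) <= rho ys ->
  -M <= x0 <= M ->
  Rpower (Rpower (m0 / (2 * M)) (- be) + sqrt (2 * M * B2)) (- / be) <= rho x0.
Proof.
  intros Hbe HB2 HM Hm0 Hpos HZ Hys Hrys Hx0.
  set (z0 := Rpower (rho x0) (- be)). set (zs := Rpower (rho ys) (- be)).
  assert (H1 := HZ ys x0 Hys Hx0). fold z0 zs in H1.
  assert (Habs : Rabs (x0 - ys) <= 2 * M) by (unfold Rabs; destruct Rcase_abs; lra).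
  assert (H2 : (z0 - zs) ^ 2 <= 2 * M * B2).
  { eapply Rle_trans; [exact H1|]. apply Rmult_le_compat_r; lra. }
  assert (H3 : z0 - zs <= sqrt (2 * M * B2)).
  { apply Rsqr_incr_0_var; [| apply sqrt_pos]. rewrite Rsqr_sqrt by nra.
    unfold Rsqr. simpl in H2. lra. }
  assert (H4 : zs <= Rpower (m0 / (2 * M)) (- be)).
  { unfold zs. apply rp_le_decr; [split; [apply Rdiv_lt_0_compat; lra| exact Hrys]| lra]. }
  assert (Hz0 : 0 < z0) by apply rp_pos.
  assert (Hr0 : 0 < rho x0) by auto.
  rewrite <- (rp_neg_inv (rho x0) be) by auto. fold z0.
  apply rp_le_decr; [lra|]. assert (0 < / be) by (apply Rinv_0_lt_compat; auto). lra.
Qed.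


(** * The relative potential rho Psi(rho, rhobar) *)

Lemma bernoulli_Rpower g s : 1 <= g -> 0 < s -> 1 + g * (s - 1) <= Rpower s g.
Proof.
  intros Hg Hs.
  set (phi := fun y => Rpower y g - g * y).
  assert (Hd : forall c, 0 < c -> derivable_pt_lim phi c (g * Rpower c (g - 1) - g)).
  { intros c Hc. unfold phi. eapply dpl_eq.
    - apply (dpl_minus (fun y => Rpower y g) (fun y => g * y)).
      + apply derivable_pt_lim_power; auto.
      + apply (dpl_mult (fun _ => g) (fun y => y)); [apply dpl_const| apply derivable_pt_lim_id].
    - ring. }
  assert (phi 1 = 1 - g) by (unfold phi; rewrite rp_one; ring).
  destruct (Rtotal_order s 1) as [Hlt|[Heq|Hgt]].
  - destruct (MVT_cor2 phi (fun c => g * Rpower c (g - 1) - g) s 1 Hlt) as [c [Hc1 Hc2]].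
    { intros c Hc; apply Hd; lra. }
    assert (Rpower c (g - 1) <= 1).
    { assert (H1 := rp_le_incr c 1 (g - 1) ltac:(lra) ltac:(lra)). rewrite rp_one in H1. exact H1. }
    assert (E1 : g * Rpower c (g - 1) - g <= 0) by nra.
    assert (E2 : (g * Rpower c (g - 1) - g) * (1 - s) <= 0).
    { replace ((g * Rpower c (g - 1) - g) * (1 - s)) with (- ((- (g * Rpower c (g - 1) - g)) * (1 - s))) by ring.
      assert (0 <= (- (g * Rpower c (g - 1) - g)) * (1 - s)) by (apply Rmult_le_pos; lra). lra. }
    unfold phi in *. lra.
  - subst. rewrite rp_one; lra.
  - destruct (MVT_cor2 phi (fun c => g * Rpower c (g - 1) - g) 1 s Hgt) as [c [Hc1 Hc2]].
    { intros c Hc; apply Hd; lra. }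
    assert (1 <= Rpower c (g - 1)).
    { assert (H1 := rp_le_incr 1 c (g - 1) ltac:(lra) ltac:(lra)). rewrite rp_one in H1. exact H1. }
    assert (E1 : 0 <= g * Rpower c (g - 1) - g) by nra.
    assert (E2 : 0 <= (g * Rpower c (g - 1) - g) * (s - 1)) by (apply Rmult_le_pos; lra).
    unfold phi in *. lra.
Qed.

(* rho Psi(rho, rhobar) is the potential with A, B given by the tangent at rhobar. *)
Definition psi_A g rb := Rpower rb g - g * Rpower rb (g - 1) * rb.
Definition psi_B g rb := g * Rpower rb (g - 1).

Lemma rhoPsi_potential g rb r : 1 < g -> rhoPsi g rb r = potential g (psi_A g rb) (psi_B g rb) r.
Proof. intros. unfold rhoPsi, potential, psi_A, psi_B. field. lra. Qed.

Lemma psi_A_eq g rb : 0 < rb -> psi_A g rb = (1 - g) * Rpower rb g.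
Proof. intros. unfold psi_A. rewrite rp_m1 by auto. field. lra. Qed.

(* Convexity: rho Psi >= 0. *)
Lemma potential_psi_nonneg g rb r : 1 < g -> 0 < rb -> 0 < r -> 0 <= potential g (psi_A g rb) (psi_B g rb) r.
Proof.
  intros Hg Hrb Hr.
  assert (Hb := bernoulli_Rpower g (r / rb) ltac:(lra) ltac:(apply Rdiv_lt_0_compat; lra)).
  assert (E : Rpower r g = Rpower rb g * Rpower (r / rb) g).
  { rewrite <- rp_mul by (try apply Rdiv_lt_0_compat; lra). f_equal. field. lra. }
  unfold potential, psi_A, psi_B. rewrite rp_m1 by auto.
  assert (Hp : 0 < Rpower rb g) by apply rp_pos.
  apply Rmult_le_pos; [|left; apply Rinv_0_lt_compat; lra].
  rewrite E.
  assert (Rpower rb g * (1 + g * (r / rb - 1)) <= Rpower rb g * Rpower (r / rb) g) by (apply Rmult_le_compat_l; lra).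
  replace (Rpower rb g * (1 + g * (r / rb - 1))) with (Rpower rb g + g * (Rpower rb g / rb) * r - g * (Rpower rb g / rb) * rb - 0) in H by (field; lra).
  lra.
Qed.

Lemma potential_psi_large g rb r : 1 < g -> 0 < rb -> Rpower (2 * psi_B g rb) (/ (g - 1)) <= r ->
  Rpower r g / (2 * (g - 1)) <= potential g (psi_A g rb) (psi_B g rb) r.
Proof.
  intros Hg Hrb Hr.
  assert (HB : 0 < psi_B g rb) by (unfold psi_B; apply Rmult_lt_0_compat; [lra| apply rp_pos]).
  assert (Hr0 : 0 < r) by (eapply Rlt_le_trans; [apply rp_pos| exact Hr]).
  assert (H1 : 2 * psi_B g rb <= Rpower r (g - 1)).
  { replace (2 * psi_B g rb) with (Rpower (Rpower (2 * psi_B g rb) (/ (g - 1))) (g - 1)).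
    - apply rp_le_incr; [split; [apply rp_pos| auto]| lra].
    - rewrite Rpower_mult. replace (/ (g - 1) * (g - 1)) with 1 by (field; lra). apply Rpower_1; lra. }
  rewrite rp_m1 in H1 by auto.
  assert (H2 : 2 * psi_B g rb * r <= Rpower r g).
  { apply Rmult_le_compat_r with (r := r) in H1; [|lra]. replace (Rpower r g / r * r) with (Rpower r g) in H1 by (field; lra). lra. }
  rewrite psi_A_eq by auto.
  assert (0 < Rpower rb g) by apply rp_pos.
  unfold potential. apply Rmult_le_reg_l with (2 * (g - 1)); [lra|].
  replace (2 * (g - 1) * (Rpower r g / (2 * (g - 1)))) with (Rpower r g) by (field; lra).
  replace (2 * (g - 1) * ((Rpower r g - (1 - g) * Rpower rb g - psi_B g rb * r) / (g - 1)))
    with (2 * (Rpower r g - (1 - g) * Rpower rb g - psi_B g rb * r)) by (field; lra).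
  nra.
Qed.

(* For small rho, rho Psi >= rhobar^g/2 > 0: vacuum costs potential energy. *)
Lemma potential_psi_small g rb r : 1 < g -> 0 < rb -> 0 < r <= (g - 1) / (2 * g) * rb ->
  Rpower rb g / 2 <= potential g (psi_A g rb) (psi_B g rb) r.
Proof.
  intros Hg Hrb Hr.
  rewrite psi_A_eq by auto. unfold potential, psi_B. rewrite rp_m1 by auto.
  assert (0 < Rpower rb g) by apply rp_pos. assert (0 < Rpower r g) by apply rp_pos.
  apply Rmult_le_reg_l with (g - 1); [lra|].
  replace ((g - 1) * ((Rpower r g - (1 - g) * Rpower rb g - g * (Rpower rb g / rb) * r) / (g - 1)))
    with (Rpower r g - (1 - g) * Rpower rb g - g * (Rpower rb g / rb) * r) by (field; lra).
  assert (g * (Rpower rb g / rb) * r <= g * (Rpower rb g / rb) * ((g - 1) / (2 * g) * rb)).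
  { apply Rmult_le_compat_l; [|lra]. apply Rmult_le_pos; [lra|]. apply Rlt_le, Rdiv_lt_0_compat; lra. }
  replace (g * (Rpower rb g / rb) * ((g - 1) / (2 * g) * rb)) with ((g - 1) / 2 * Rpower rb g) in H1 by (field; lra).
  nra.
Qed.


(* f is bounded for |x| large, uniformly in t in [0, T]; products of decaying
   and far-bounded functions decay, which controls boundary fluxes at +-infinity. *)
Definition bounded_far T (f : R -> R -> R) := exists K R0, forall x t, 0 <= t <= T -> R0 < Rabs x -> Rabs (f x t) <= K.

Lemma decay_bounded_far T f : decay0 T f -> bounded_far T f.
Proof. intros H. destruct (H 1 ltac:(lra)) as [R0 HR]. exists 1, R0. intros. left; auto. Qed.

Lemma bf_const T c : bounded_far T (fun _ _ => c).
Proof. exists (Rabs c), 0. intros; lra. Qed.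

Lemma bf_join T f g (P : R -> R -> R -> R -> R) :
  (forall K1 K2, exists K, forall a b, Rabs a <= K1 -> Rabs b <= K2 -> Rabs (P a b 0 0) <= K) ->
  bounded_far T f -> bounded_far T g -> bounded_far T (fun x t => P (f x t) (g x t) 0 0).
Proof.
  intros HP [K1 [R1 H1]] [K2 [R2 H2]]. destruct (HP K1 K2) as [K HK].
  exists K, (Rmax R1 R2). intros x t Ht Hx. apply HK.
  - apply H1; auto. eapply Rle_lt_trans; [apply Rmax_l| exact Hx].
  - apply H2; auto. eapply Rle_lt_trans; [apply Rmax_r| exact Hx].
Qed.

Lemma bf_plus T f g : bounded_far T f -> bounded_far T g -> bounded_far T (fun x t => f x t + g x t).
Proof.
  intros. apply (bf_join T f g (fun a b _ _ => a + b)); auto.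
  intros K1 K2. exists (K1 + K2). intros a b Ha Hb. eapply Rle_trans; [apply Rabs_triang| lra].
Qed.

Lemma bf_minus T f g : bounded_far T f -> bounded_far T g -> bounded_far T (fun x t => f x t - g x t).
Proof.
  intros. apply (bf_join T f g (fun a b _ _ => a - b)); auto.
  intros K1 K2. exists (K1 + K2). intros a b Ha Hb. eapply Rle_trans; [apply Rabs_triang| rewrite Rabs_Ropp; lra].
Qed.

Lemma bf_mult T f g : bounded_far T f -> bounded_far T g -> bounded_far T (fun x t => f x t * g x t).
Proof.
  intros. apply (bf_join T f g (fun a b _ _ => a * b)); auto.
  intros K1 K2. exists (Rabs K1 * Rabs K2). intros a b Ha Hb. rewrite Rabs_mult.
  apply Rmult_le_compat; try apply Rabs_pos.
  - eapply Rle_trans; [exact Ha| apply Rle_abs].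
  - eapply Rle_trans; [exact Hb| apply Rle_abs].
Qed.

Lemma bf_divc T f c : bounded_far T f -> bounded_far T (fun x t => f x t / c).
Proof. intros. unfold Rdiv. apply (bf_mult T f (fun _ _ => / c)); auto. apply bf_const. Qed.

Lemma bf_pow T f n : bounded_far T f -> bounded_far T (fun x t => f x t ^ n).
Proof.
  intros H. induction n.
  - simpl. apply bf_const.
  - simpl. apply (bf_mult T f (fun x t => f x t ^ n)); auto.
Qed.

Lemma bf_Rpower T r rb e : decay0 T (fun x t => r x t - rb) -> 0 < rb -> bounded_far T (fun x t => Rpower (r x t) e).
Proof.
  intros H Hrb. destruct (H (rb / 2) ltac:(lra)) as [R0 HR].
  exists (Rpower (rb / 2) e + Rpower (3 * rb / 2) e), R0. intros x t Ht Hx.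
  specialize (HR x t Ht Hx). assert (Hr : rb / 2 < r x t < 3 * rb / 2) by (revert HR; unfold Rabs; destruct Rcase_abs; lra).
  assert (H1 : 0 < Rpower (r x t) e) by apply rp_pos.
  assert (H2 : 0 < Rpower (rb / 2) e) by apply rp_pos.
  assert (H3 : 0 < Rpower (3 * rb / 2) e) by apply rp_pos.
  rewrite Rabs_right by lra.
  destruct (Rle_dec 0 e).
  - assert (Rpower (r x t) e <= Rpower (3 * rb / 2) e) by (apply rp_le_incr; lra). lra.
  - assert (Rpower (r x t) e <= Rpower (rb / 2) e) by (apply rp_le_decr; lra). lra.
Qed.

Lemma bf_shift T r rb : decay0 T (fun x t => r x t - rb) -> bounded_far T r.
Proof.
  intros H. destruct (decay_bounded_far T _ H) as [K [R0 HK]]. exists (K + Rabs rb), R0. intros x t Ht Hx.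
  replace (r x t) with ((r x t - rb) + rb) by ring. eapply Rle_trans; [apply Rabs_triang|].
  specialize (HK x t Ht Hx). lra.
Qed.

Lemma decay_mult T f g : decay0 T f -> bounded_far T g -> decay0 T (fun x t => f x t * g x t).
Proof.
  intros Hf [K [R0 HK]] eps Heps.
  assert (HK1 : 0 < Rabs K + 1) by (assert (0 <= Rabs K) by apply Rabs_pos; lra).
  destruct (Hf (eps / (2 * (Rabs K + 1)))) as [R1 HR1]; [apply Rdiv_lt_0_compat; lra|].
  exists (Rmax R0 R1). intros x t Ht Hx.
  assert (A1 := HK x t Ht ltac:(eapply Rle_lt_trans; [apply Rmax_l| exact Hx])).
  assert (A2 := HR1 x t Ht ltac:(eapply Rle_lt_trans; [apply Rmax_r| exact Hx])).
  rewrite Rabs_mult.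
  assert (Rabs (g x t) <= Rabs K + 1) by (assert (K <= Rabs K) by apply Rle_abs; lra).
  apply Rle_lt_trans with (eps / (2 * (Rabs K + 1)) * (Rabs K + 1)).
  - apply Rmult_le_compat; try apply Rabs_pos; lra.
  - replace (eps / (2 * (Rabs K + 1)) * (Rabs K + 1)) with (eps / 2) by (field; lra). lra.
Qed.

Lemma decay_ext T f g : (forall x t, g x t = f x t) -> decay0 T f -> decay0 T g.
Proof. intros E H eps Heps. destruct (H eps Heps) as [R0 HR]. exists R0. intros; rewrite E; auto. Qed.

Ltac solve_bounded_far :=
  lazymatch goal with
  | |- bounded_far _ (fun _ _ => ?c) => apply bf_const
  | |- bounded_far ?T (fun x t => @?A x t + @?B x t) => apply (bf_plus T A B); solve_bounded_far
  | |- bounded_far ?T (fun x t => @?A x t - @?B x t) => apply (bf_minus T A B); solve_bounded_far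
  | |- bounded_far ?T (fun x t => @?A x t * @?B x t) => apply (bf_mult T A B); solve_bounded_far
  | |- bounded_far ?T (fun x t => @?A x t / ?c) => apply (bf_divc T A c); solve_bounded_far
  | |- bounded_far ?T (fun x t => @?A x t ^ ?n) => apply (bf_pow T A n); solve_bounded_far
  | |- bounded_far ?T (fun x t => Rpower (?r x t) ?e) => eapply (bf_Rpower T r); [eassumption| assumption]
  | |- bounded_far ?T ?f => first [eapply bf_shift; eassumption | apply decay_bounded_far; assumption | fail 2 "bleaf" f]
  end.


(** * Part (a): the whole line, rhobar > 0 *)

Lemma whole_line_limit (Et E00 I0 : R -> R) Kc E0 c d T t :
  (forall a b, a <= b -> ex_RInt Et a b) -> (forall x, 0 <= Et x) ->
  (forall a b, a <= b -> ex_RInt E00 a b) -> (forall x, E00 x <= Kc * I0 x) -> 0 <= Kc ->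
  has_int_R I0 E0 -> (forall x, 0 <= I0 x) -> 0 <= t <= T ->
  (forall eps, 0 < eps -> exists R0, forall a b, a < - R0 -> R0 < b ->
      RInt Et a b <= RInt E00 a b + eps * t) ->
  c <= d -> RInt Et c d <= Kc * Rabs E0.
Proof.
  intros HEt HEt0 HE00 HE00I HKc HI HI0 Ht Hlim Hcd.
  apply le_epsilon. intros e He.
  destruct (Hlim (e / (T + 1))) as [R0 HR]; [apply Rdiv_lt_0_compat; lra|].
  set (a := Rmin c (- R0 - 1) - 1). set (b := Rmax d (R0 + 1) + 1).
  assert (H1 : a < c) by (unfold a; assert (H := Rmin_l c (- R0 - 1)); lra).
  assert (H2 : a < - R0) by (unfold a; assert (H := Rmin_r c (- R0 - 1)); lra).
  assert (H3 : d < b) by (unfold b; assert (H := Rmax_l d (R0 + 1)); lra).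
  assert (H4 : R0 < b) by (unfold b; assert (H := Rmax_r d (R0 + 1)); lra).
  specialize (HR a b H2 H4).
  assert (S1 : RInt Et c d <= RInt Et a b) by (apply RInt_subinterval_le; try lra; [apply HEt; lra| intros; apply HEt0]).
  destruct (has_int_R_bound I0 E0 a b HI ltac:(lra) HI0) as [HexI HleI].
  assert (S2 : RInt E00 a b <= RInt (fun x => scal Kc (I0 x)) a b).
  { apply RInt_le; [lra| apply HE00; lra| apply (@ex_RInt_scal R_NormedModule); auto|]. intros; apply HE00I. }
  rewrite (@RInt_scal R_CompleteNormedModule) in S2 by auto. unfold scal in S2; simpl in S2; unfold mult in S2; simpl in S2.
  assert (S3 : Kc * RInt I0 a b <= Kc * Rabs E0).
  { apply Rmult_le_compat_l; auto. eapply Rle_trans; [exact HleI| apply Rle_abs]. }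
  assert (S4 : e / (T + 1) * t <= e).
  { apply Rle_trans with (e / (T + 1) * (T + 1)).
    - apply Rmult_le_compat_l; [left; apply Rdiv_lt_0_compat; lra| lra].
    - right. field. lra. }
  lra.
Qed.

Lemma decay_flux_small T F : decay0 T F ->
  forall eps, 0 < eps -> exists R0, 0 <= R0 /\ forall a b, a < - R0 -> R0 < b ->
    forall s, 0 < s < T -> F a s - F b s <= eps.
Proof.
  intros HF eps Heps. destruct (HF (eps / 2) ltac:(lra)) as [R0 HR0].
  exists (Rabs R0). split; [apply Rabs_pos|]. intros a b Ha Hb s Hs.
  assert (HRa := Rle_abs R0). assert (HRb : - Rabs R0 <= R0) by (unfold Rabs; destruct Rcase_abs; lra).
  assert (H1 := HR0 a s ltac:(lra) ltac:(unfold Rabs at 1; destruct Rcase_abs; lra)).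
  assert (H2 := HR0 b s ltac:(lra) ltac:(unfold Rabs at 1; destruct Rcase_abs; lra)).
  revert H1 H2. unfold Rabs; repeat destruct Rcase_abs; lra.
Qed.

Lemma Dstrip_iff T : forall x t, Dstrip T x t <-> (fun _ : R => True) x /\ 0 <= t <= T.
Proof. intros; unfold Dstrip; tauto. Qed.

(* The bound on energy and BD entropy in part (a), e = E0. *)
Definition line_B1 al e := (1 + / (al - / 2) ^ 2) * Rabs e + 1.

Section WholeLine.
Variables (g al rb T E0 : R) (rho u q rx rt rxx rxt ux ut uxx : R -> R -> R).
Hypothesis Hg : 1 < g.
Hypothesis Hal : 0 < al < / 2.
Hypothesis Hrb : 0 < rb.
Hypothesis HT : 0 < T.
Hypothesis HG : regular_solution (fun _ => True) T g al rho rx rt rxx rxt u ux ut uxx.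
Hypotheses (Cr : cont_on (Dstrip T) rho) (Crx : cont_on (Dstrip T) rx) (Crt : cont_on (Dstrip T) rt)
  (Crxx : cont_on (Dstrip T) rxx) (Crxt : cont_on (Dstrip T) rxt) (Cu : cont_on (Dstrip T) u)
  (Cux : cont_on (Dstrip T) ux) (Cut : cont_on (Dstrip T) ut) (Cuxx : cont_on (Dstrip T) uxx).
Hypotheses (Dr : decay0 T (fun x t => rho x t - rb)) (Drx : decay0 T rx)
  (Du : decay0 T u) (Dux : decay0 T ux).
Hypothesis Hq : forall x t, Dstrip T x t ->
  pdx (Dstrip T) (fun y s => Rpower (rho y s) (al - / 2)) x t (q x t).
Hypothesis HE0 : has_int_R (fun x => rho x 0 * u x 0 ^ 2 + q x 0 ^ 2 + rhoPsi g rb (rho x 0)) E0.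

Lemma line_pos x t : 0 <= t <= T -> 0 < rho x t.
Proof. intros; apply (rs_pos HG); auto. Qed.

Lemma line_potential_nonneg x t : 0 <= t <= T -> 0 <= potential g (psi_A g rb) (psi_B g rb) (rho x t).
Proof. intros; apply potential_psi_nonneg; auto; apply line_pos; auto. Qed.

Lemma line_ex_RInt (F : R -> R -> R) :
  (forall a b, a < b ->
       (forall x t, continuity_2d_pt (fun x t => rho (clamp a b x) (clamp 0 T t)) x t) ->
       (forall x t, continuity_2d_pt (fun x t => rx (clamp a b x) (clamp 0 T t)) x t) ->
       (forall x t, continuity_2d_pt (fun x t => u (clamp a b x) (clamp 0 T t)) x t) ->
       (forall x t, continuity_2d_pt (fun x t => ux (clamp a b x) (clamp 0 T t)) x t) ->
       (forall x t, 0 < rho (clamp a b x) (clamp 0 T t)) ->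
       forall x t, continuity_2d_pt (fun x t => F (clamp a b x) (clamp 0 T t)) x t) ->
  forall s, 0 <= s <= T -> forall a b, a <= b -> ex_RInt (fun x => F x s) a b.
Proof.
  intros HF s Hs. apply ex_RInt_of_lt. intros a b Hab.
  assert (HX : forall y, a <= y <= b -> True) by (intros; exact I).
  apply cont_ab_ex_RInt; [lra|]. apply (c2d_cont_ab F a b T s); [lra| auto|].
  apply HF; auto; try (apply (cont_on_clamped _ _ _ (Dstrip_iff T)); auto).
  intros; apply line_pos. apply clamp_in; lra.
Qed.

Lemma line_initial_densities x :
  energy_dens g (psi_A g rb) (psi_B g rb) (rho x 0) (u x 0)
    <= (1 + / (al - / 2) ^ 2) * (rho x 0 * u x 0 ^ 2 + q x 0 ^ 2 + rhoPsi g rb (rho x 0)) /\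
  bd_dens g al (psi_A g rb) (psi_B g rb) (rho x 0) (rx x 0) (u x 0)
    <= (1 + / (al - / 2) ^ 2) * (rho x 0 * u x 0 ^ 2 + q x 0 ^ 2 + rhoPsi g rb (rho x 0)).
Proof.
  assert (HT0 : 0 <= 0 <= T) by lra.
  assert (Hxi : interior_pt (fun _ => True) x) by (exists 1; split; [lra| intros; exact I]).
  assert (Hq0 := q_is_z_x (Dstrip T) _ T g al rho rx rt rxx rxt u ux ut uxx q x 0 (Dstrip_iff T) HG Hq Hxi HT0).
  assert (Hc0 : 0 < / (al - / 2) ^ 2).
  { apply Rinv_0_lt_compat. replace ((al - / 2) ^ 2) with ((/ 2 - al) ^ 2) by ring. apply pow_lt; lra. }
  assert (Hr := line_pos x 0 HT0). assert (HGf := line_potential_nonneg x 0 HT0).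
  rewrite rhoPsi_potential by auto. rewrite Hq0. split.
  - unfold energy_dens.
    assert (0 <= z_x al (rho x 0) (rx x 0) ^ 2) by apply pow2_ge_0.
    assert (0 <= rho x 0 * u x 0 ^ 2) by (apply Rmult_le_pos; [lra| apply pow2_ge_0]).
    set (S := rho x 0 * u x 0 ^ 2 + z_x al (rho x 0) (rx x 0) ^ 2 + potential g (psi_A g rb) (psi_B g rb) (rho x 0)).
    assert (0 <= / (al - / 2) ^ 2 * S) by (apply Rmult_le_pos; unfold S; lra).
    unfold S in *. lra.
  - apply bd_dens_initial; auto.
Qed.

Lemma line_flux_decay :
  decay0 T (fun x t => energy_flux g al (psi_A g rb) (psi_B g rb) (rho x t) (u x t) (ux x t)) /\
  decay0 T (fun x t => bd_flux g al (psi_A g rb) (psi_B g rb) (rho x t) (rx x t) (u x t)).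
Proof.
  set (A := psi_A g rb). set (B := psi_B g rb). split.
  - apply decay_ext with (fun x t => u x t * (rho x t * u x t ^ 2 / 2 + (Rpower (rho x t) g - A - B * rho x t) / (g - 1)
       + (Rpower (rho x t) g + A / (g - 1)) - Rpower (rho x t) al * ux x t)).
    { intros; cbv beta; unfold energy_flux, potential; field. lra. }
    apply (decay_mult T u); auto. solve_bounded_far.
  - apply decay_ext with (fun x t => u x t * (rho x t * (u x t + Rpower (rho x t) (al - 2) * rx x t) ^ 2 / 2
       + (Rpower (rho x t) g - A - B * rho x t) / (g - 1) + (Rpower (rho x t) g + A / (g - 1)))).
    { intros; cbv beta; unfold bd_flux, bd_vel, potential; field; lra. }
    apply (decay_mult T u); auto. solve_bounded_far.
Qed.

Lemma line_initial_nonneg x : 0 <= rho x 0 * u x 0 ^ 2 + q x 0 ^ 2 + rhoPsi g rb (rho x 0).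
Proof.
  rewrite rhoPsi_potential by auto.
  assert (Hr := line_pos x 0 ltac:(lra)). assert (H1 := line_potential_nonneg x 0 ltac:(lra)).
  assert (0 <= rho x 0 * u x 0 ^ 2) by (apply Rmult_le_pos; [lra| apply pow2_ge_0]).
  assert (0 <= q x 0 ^ 2) by apply pow2_ge_0. lra.
Qed.

Lemma line_energy_bound t c d : 0 <= t <= T -> c <= d ->
  RInt (fun x => energy_dens g (psi_A g rb) (psi_B g rb) (rho x t) (u x t)) c d
    <= (1 + / (al - / 2) ^ 2) * Rabs E0.
Proof.
  intros Ht Hcd. set (A := psi_A g rb). set (B := psi_B g rb).
  assert (HKc := Rinv_0_lt_compat _ (sq_half_pos al ltac:(lra))).
  apply (whole_line_limit (fun x => energy_dens g A B (rho x t) (u x t))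
    (fun x => energy_dens g A B (rho x 0) (u x 0))
    (fun x => rho x 0 * u x 0 ^ 2 + q x 0 ^ 2 + rhoPsi g rb (rho x 0)) (1 + / (al - / 2) ^ 2) E0 c d T t);
    auto using line_initial_nonneg; try lra.
  - apply (line_ex_RInt (fun x t => energy_dens g A B (rho x t) (u x t))); auto.
    intros; cbv beta; unfold energy_dens, potential; solve_cont2d.
  - intros x. apply energy_dens_nonneg; [apply line_pos| apply line_potential_nonneg]; auto.
  - apply (line_ex_RInt (fun x t => energy_dens g A B (rho x t) (u x t))); [|lra].
    intros; cbv beta; unfold energy_dens, potential; solve_cont2d.
  - intros x. apply line_initial_densities.
  - intros eps Heps. destruct (decay_flux_small T _ (proj1 line_flux_decay) eps Heps) as [R0 [HR0p HR0]].
    exists R0. intros a b Ha Hb.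
    apply (energy_inequality (Dstrip T) (fun _ => True) T g al A B a b rho rx rt rxx rxt u ux ut uxx eps);
      auto using Dstrip_iff; lra.
Qed.

Lemma line_bd_bound t c d : 0 <= t <= T -> c <= d ->
  RInt (fun x => bd_dens g al (psi_A g rb) (psi_B g rb) (rho x t) (rx x t) (u x t)) c d
    <= (1 + / (al - / 2) ^ 2) * Rabs E0.
Proof.
  intros Ht Hcd. set (A := psi_A g rb). set (B := psi_B g rb).
  assert (HKc := Rinv_0_lt_compat _ (sq_half_pos al ltac:(lra))).
  apply (whole_line_limit (fun x => bd_dens g al A B (rho x t) (rx x t) (u x t))
    (fun x => bd_dens g al A B (rho x 0) (rx x 0) (u x 0))
    (fun x => rho x 0 * u x 0 ^ 2 + q x 0 ^ 2 + rhoPsi g rb (rho x 0)) (1 + / (al - / 2) ^ 2) E0 c d T t);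
    auto using line_initial_nonneg; try lra.
  - apply (line_ex_RInt (fun x t => bd_dens g al A B (rho x t) (rx x t) (u x t))); auto.
    intros; cbv beta; unfold bd_dens, bd_vel, potential; solve_cont2d.
  - intros x. apply bd_dens_nonneg; [apply line_pos| apply line_potential_nonneg]; auto.
  - apply (line_ex_RInt (fun x t => bd_dens g al A B (rho x t) (rx x t) (u x t))); [|lra].
    intros; cbv beta; unfold bd_dens, bd_vel, potential; solve_cont2d.
  - intros x. apply line_initial_densities.
  - intros eps Heps. destruct (decay_flux_small T _ (proj2 line_flux_decay) eps Heps) as [R0 [HR0p HR0]].
    exists R0. intros a b Ha Hb.
    apply (bd_inequality (Dstrip T) (fun _ => True) T g al A B a b rho rx rt rxx rxt u ux ut uxx eps);
      auto using Dstrip_iff; lra.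
Qed.

Lemma line_B1_bound : (1 + / (al - / 2) ^ 2) * Rabs E0 <= line_B1 al E0.
Proof. unfold line_B1; lra. Qed.

Lemma line_holder t : 0 <= t <= T -> forall x y,
  (Rpower (rho y t) (al - / 2) - Rpower (rho x t) (al - / 2)) ^ 2 <= Rabs (y - x) * (2 * line_B1 al E0).
Proof.
  intros Ht x y.
  assert (H1 := Rmin_l x y). assert (H2 := Rmax_l x y). assert (H3 := Rmin_r x y). assert (H4 := Rmax_r x y).
  assert (HB := line_B1_bound).
  apply (z_holder (Dstrip T) (fun _ => True) T g al (psi_A g rb) (psi_B g rb) (Rmin x y - 1) (Rmax x y + 1)
           rho rx rt rxx rxt u ux ut uxx t (line_B1 al E0) (Dstrip_iff T));
    try solve [auto | intros; exact I | intros; apply line_potential_nonneg; auto | lra].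
  intros c d _ Hcd _. split.
  - eapply Rle_trans; [apply line_energy_bound; auto| exact HB].
  - eapply Rle_trans; [apply line_bd_bound; auto| exact HB].
Qed.

Lemma line_potential_bound t : 0 <= t <= T -> forall c d m, c <= d ->
  (forall y, c < y < d -> m <= potential g (psi_A g rb) (psi_B g rb) (rho y t)) -> m * (d - c) <= line_B1 al E0.
Proof.
  intros Ht c d m Hcd Hm. set (A := psi_A g rb). set (B := psi_B g rb).
  apply (RInt_mean_bound (fun y => potential g A B (rho y t)) (fun y => energy_dens g A B (rho y t) (u y t)));
    auto.
  - apply (line_ex_RInt (fun x t => potential g A B (rho x t))); auto.
    intros; cbv beta; unfold potential; solve_cont2d.
  - apply (line_ex_RInt (fun x t => energy_dens g A B (rho x t) (u x t))); auto.
    intros; cbv beta; unfold energy_dens, potential; solve_cont2d.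
  - intros y Hy. apply potential_le_energy_dens, line_pos; auto.
  - eapply Rle_trans; [apply line_energy_bound; auto| apply line_B1_bound].
Qed.

End WholeLine.

Definition line_lower g al rb e :=
  Rmin (Rpower 2 (- / (/ 2 - al)) * ((g - 1) / (2 * g) * rb))
       (Rpower (4 * line_B1 al e * (2 * line_B1 al e) / (Rpower rb g / 2)) (- / (2 * (/ 2 - al)))).

Definition line_upper g al rb e :=
  Rmax (Rmax (Rpower (2 * psi_B g rb) (/ (g - 1)) * Rpower 2 (/ (/ 2 - al)))
             (rho_cap g (/ 2 - al) (line_B1 al e) (2 * line_B1 al e)))
       (line_lower g al rb e).

Lemma line_lower_pos g al rb e : 1 < g -> 0 < rb -> 0 < line_lower g al rb e.
Proof.
  intros Hg Hrb. unfold line_lower. apply Rmin_pos; [|apply rp_pos].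
  apply Rmult_lt_0_compat; [apply rp_pos|]. apply Rmult_lt_0_compat; [apply Rdiv_lt_0_compat|]; lra.
Qed.

Lemma line_density_bounds g al rb T rho u q E0 :
  1 < g -> 0 < al < / 2 -> 0 < rb -> 0 < T ->
  is_solution (Dstrip T) g al rho u ->
  smooth_on (Dstrip T) (decay0 T) (fun x t => rho x t - rb) ->
  smooth_on (Dstrip T) (decay0 T) u ->
  (forall x t, Dstrip T x t -> pdx (Dstrip T) (fun y s => Rpower (rho y s) (al - / 2)) x t (q x t)) ->
  has_int_R (fun x => rho x 0 * u x 0 ^ 2 + q x 0 ^ 2 + rhoPsi g rb (rho x 0)) E0 ->
  forall x t, 0 <= t <= T -> line_lower g al rb E0 <= rho x t <= line_upper g al rb E0.
Proof.
  intros Hg Hal Hrb HT Hsol Hsr Hsu Hq HE0 x t Ht.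
  assert (Dr : decay0 T (fun x t => rho x t - rb)) by (destruct Hsr; auto).
  assert (Du : decay0 T u) by (destruct Hsu; auto).
  destruct (regular_solution_of_smooth (Dstrip T) (fun _ => True) T g al rho u (fun x t => rho x t - rb) rb
              (decay0 T) (decay0 T) (Dstrip_iff T) HT (fun x t => eq_refl) Hsol Hsr Hsu)
    as [rx [rt [rxx [rxt [ux [ut [uxx [HG [Cr [Crx [Crt [Crxx [Crxt [Cu [Cux [Cut [Cuxx [Drx Dux]]]]]]]]]]]]]]]]]].
  set (be := / 2 - al). set (B1 := line_B1 al E0).
  assert (Hbe : 0 < be) by (unfold be; lra).
  assert (HB1 : 0 < B1).
  { unfold B1, line_B1. assert (0 <= Rabs E0) by apply Rabs_pos.
    assert (0 < / (al - / 2) ^ 2) by (apply Rinv_0_lt_compat, sq_half_pos; lra). nra. }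
  assert (HZ := line_holder g al rb T E0 rho u q rx rt rxx rxt ux ut uxx Hg Hal Hrb HT HG
     Cr Crx Crt Crxx Crxt Cu Cux Cut Cuxx Dr Drx Du Dux Hq HE0 t Ht).
  assert (HGi := line_potential_bound g al rb T E0 rho u q rx rt rxx rxt ux ut uxx Hg Hal Hrb HT HG
     Cr Crx Crt Cu Cux Cut Cuxx Dr Drx Du Dux Hq HE0 t Ht).
  replace (al - / 2) with (- be) in HZ by (unfold be; ring). fold B1 in HZ, HGi.
  assert (Hpos : forall y, 0 < rho y t) by (intros; apply (rs_pos HG); auto).
  split.
  - unfold line_lower. fold be B1.
    apply (lower_bound_line (fun y => rho y t) (potential g (psi_A g rb) (psi_B g rb)) be B1 (2 * B1)); auto; try lra.
    + apply Rmult_lt_0_compat; [apply Rdiv_lt_0_compat|]; lra.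
    + assert (0 < Rpower rb g) by apply rp_pos. lra.
    + intros r Hr. apply potential_psi_small; auto.
  - unfold line_upper. eapply Rle_trans; [|apply Rmax_l]. fold be B1.
    apply (upper_bound_line (fun y => rho y t) (potential g (psi_A g rb) (psi_B g rb)) be g B1 (2 * B1)); auto; try lra.
    + unfold be; lra.
    + apply rp_pos.
    + intros r Hr. apply potential_psi_large; auto.
Qed.

Lemma lemma3p2_line gamma alpha : 1 < gamma -> 0 < alpha < / 2 ->
  (forall rhobar : R, 0 < rhobar ->
   exists Ct C : R -> R,
     (forall e, 0 < Ct e /\ Ct e <= C e) /\
     forall (T : R) (rho u q : R -> R -> R) (E0 : R),
       0 < T ->
       is_solution (Dstrip T) gamma alpha rho u ->
       smooth_on (Dstrip T) (decay0 T) (fun x t => rho x t - rhobar) ->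
       smooth_on (Dstrip T) (decay0 T) u ->
       (forall x t, Dstrip T x t ->
          pdx (Dstrip T) (fun y s => Rpower (rho y s) (alpha - / 2)) x t (q x t)) ->
       has_int_R (fun x => rho x 0 * (u x 0)^2 + (q x 0)^2
                           + rhoPsi gamma rhobar (rho x 0)) E0 ->
       forall x t, Dstrip T x t -> Ct E0 <= rho x t <= C E0).
Proof.
  intros Hg Hal rb Hrb.
  exists (line_lower gamma alpha rb), (line_upper gamma alpha rb). split.
  - intros e. split; [apply line_lower_pos; auto| apply Rmax_r].
  - intros T rho u q E0 HT Hsol Hsr Hsu Hq HE0 x t Hxt.
    apply (line_density_bounds gamma alpha rb T rho u q E0); auto.
Qed.

(** * Part (b): a bounded interval, rhobar = 0 *)

Lemma Drect_iff M T : forall x t, Drect M T x t <-> (fun x => - M <= x <= M) x /\ 0 <= t <= T.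
Proof. intros; unfold Drect; tauto. Qed.

(* The bound on energy and BD entropy in part (b), e = E0. *)
Definition int_B1 g al e := (1 + / (al - / 2) ^ 2) * (1 + / (g - 1)) * Rabs e + 1.

Section Interval.
Variables (g al M T E0 m0 : R) (rho u q rx rt rxx rxt ux ut uxx : R -> R -> R).
Hypothesis Hg : 1 < g.
Hypothesis Hal : 0 < al < / 2.
Hypothesis HM : 0 < M.
Hypothesis HT : 0 < T.
Hypothesis HG : regular_solution (fun x => - M <= x <= M) T g al rho rx rt rxx rxt u ux ut uxx.
Hypotheses (Cr : cont_on (Drect M T) rho) (Crx : cont_on (Drect M T) rx) (Crt : cont_on (Drect M T) rt)
  (Crxx : cont_on (Drect M T) rxx) (Crxt : cont_on (Drect M T) rxt) (Cu : cont_on (Drect M T) u)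
  (Cux : cont_on (Drect M T) ux) (Cut : cont_on (Drect M T) ut) (Cuxx : cont_on (Drect M T) uxx).
Hypothesis Hbd : forall t, 0 <= t <= T -> u (- M) t = 0 /\ u M t = 0.
Hypothesis Hq : forall x t, Drect M T x t ->
  pdx (Drect M T) (fun y s => Rpower (rho y s) (al - / 2)) x t (q x t).
Hypothesis HE0 : has_int (fun x => rho x 0 * u x 0 ^ 2 + q x 0 ^ 2 + Rpower (rho x 0) g) (- M) M E0.
Hypothesis Hm0 : has_int (fun x => rho x 0) (- M) M m0.

Let HX : forall y, - M <= y <= M -> (fun x => - M <= x <= M) y.
Proof. auto. Qed.

Lemma int_pos x t : - M <= x <= M -> 0 <= t <= T -> 0 < rho x t.
Proof. intros; apply (rs_pos HG); auto. Qed.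

Lemma int_ex_RInt (F : R -> R -> R) :
  ((forall x t, continuity_2d_pt (fun x t => rho (clamp (- M) M x) (clamp 0 T t)) x t) ->
   (forall x t, continuity_2d_pt (fun x t => rx (clamp (- M) M x) (clamp 0 T t)) x t) ->
   (forall x t, continuity_2d_pt (fun x t => u (clamp (- M) M x) (clamp 0 T t)) x t) ->
   (forall x t, 0 < rho (clamp (- M) M x) (clamp 0 T t)) ->
   forall x t, continuity_2d_pt (fun x t => F (clamp (- M) M x) (clamp 0 T t)) x t) ->
  forall s, 0 <= s <= T -> forall c d, - M <= c -> c <= d -> d <= M -> ex_RInt (fun x => F x s) c d.
Proof.
  intros HF s Hs c d H1 H2 H3. apply (cont_ab_ex_RInt_sub (- M) M); auto.
  apply (c2d_cont_ab F (- M) M T s); [lra| auto|].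
  apply HF; try (apply (cont_on_clamped _ _ _ (Drect_iff M T)); auto; lra).
  intros; apply int_pos; apply clamp_in; lra.
Qed.

Lemma int_initial_bound (F : R -> R) K : 0 <= K -> ex_RInt F (- M) M ->
  (forall x, - M < x < M -> F x <= K * (rho x 0 * u x 0 ^ 2 + q x 0 ^ 2 + Rpower (rho x 0) g)) ->
  RInt F (- M) M <= K * Rabs E0.
Proof.
  intros HK HF Hle. destruct HE0 as [pr Hpr].
  assert (HexI : ex_RInt (fun x => rho x 0 * u x 0 ^ 2 + q x 0 ^ 2 + Rpower (rho x 0) g) (- M) M)
    by (apply ex_RInt_Reals_1; exact pr).
  apply Rle_trans with (RInt (fun x => scal K (rho x 0 * u x 0 ^ 2 + q x 0 ^ 2 + Rpower (rho x 0) g)) (- M) M).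
  - apply RInt_le; [lra| auto| apply (@ex_RInt_scal R_NormedModule); auto| auto].
  - rewrite (@RInt_scal R_CompleteNormedModule) by auto. rewrite RInt_Reals with (pr := pr), Hpr.
    apply Rmult_le_compat_l; [lra| apply Rle_abs].
Qed.

Lemma int_initial_densities x : - M < x < M ->
  energy_dens g 0 0 (rho x 0) (u x 0)
    <= (1 + / (al - / 2) ^ 2) * (1 + / (g - 1)) * (rho x 0 * u x 0 ^ 2 + q x 0 ^ 2 + Rpower (rho x 0) g) /\
  bd_dens g al 0 0 (rho x 0) (rx x 0) (u x 0)
    <= (1 + / (al - / 2) ^ 2) * (1 + / (g - 1)) * (rho x 0 * u x 0 ^ 2 + q x 0 ^ 2 + Rpower (rho x 0) g).
Proof.
  intros Hx.
  assert (Hic0 := Rinv_0_lt_compat _ (sq_half_pos al ltac:(lra))).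
  assert (Hig : 0 < / (g - 1)) by (apply Rinv_0_lt_compat; lra).
  assert (Hr : 0 < rho x 0) by (apply int_pos; lra).
  assert (Hp : 0 < Rpower (rho x 0) g) by apply rp_pos.
  assert (Hu : 0 <= rho x 0 * u x 0 ^ 2) by (apply Rmult_le_pos; [lra| apply pow2_ge_0]).
  assert (Hq2 : 0 <= q x 0 ^ 2) by apply pow2_ge_0.
  set (I0 := rho x 0 * u x 0 ^ 2 + q x 0 ^ 2 + Rpower (rho x 0) g).
  assert (Hbase : rho x 0 * u x 0 ^ 2 + q x 0 ^ 2 + potential g 0 0 (rho x 0) <= (1 + / (g - 1)) * I0).
  { rewrite potential_00 by auto. unfold I0.
    assert (0 <= / (g - 1) * (rho x 0 * u x 0 ^ 2 + q x 0 ^ 2)) by (apply Rmult_le_pos; lra).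
    unfold Rdiv. nra. }
  assert (HI0 : 0 <= I0) by (unfold I0; lra).
  assert (HKc1 : 1 + / (g - 1) <= (1 + / (al - / 2) ^ 2) * (1 + / (g - 1))).
  { assert (0 <= / (al - / 2) ^ 2 * (1 + / (g - 1))) by (apply Rmult_le_pos; lra). nra. }
  split.
  - eapply Rle_trans; [|apply Rmult_le_compat_r; [exact HI0| exact HKc1]].
    eapply Rle_trans; [|exact Hbase]. unfold energy_dens. lra.
  - eapply Rle_trans.
    { apply (bd_dens_initial g al 0 0 (rho x 0) (rx x 0) (u x 0)); [auto| lra| apply potential_00_nonneg; auto]. }
    rewrite <- (q_is_z_x (Drect M T) _ T g al rho rx rt rxx rxt u ux ut uxx q x 0 (Drect_iff M T) HG Hq)
      by (try apply interior_pt_of_interval with (- M) M; auto; lra).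
    rewrite Rmult_assoc. apply Rmult_le_compat_l; [lra| exact Hbase].
Qed.

(* Energy and BD entropy at any time are at most Kc |E0|; the boundary fluxes
   vanish since u(+-M) = 0. *)
Lemma int_energy_bound t : 0 <= t <= T ->
  RInt (fun x => energy_dens g 0 0 (rho x t) (u x t)) (- M) M
    <= (1 + / (al - / 2) ^ 2) * (1 + / (g - 1)) * Rabs E0.
Proof.
  intros Ht. assert (Hab : - M < M) by lra.
  assert (Hic0 := Rinv_0_lt_compat _ (sq_half_pos al ltac:(lra))).
  assert (Hig : 0 < / (g - 1)) by (apply Rinv_0_lt_compat; lra).
  eapply Rle_trans.
  - apply (energy_inequality (Drect M T) (fun x => - M <= x <= M) T g al 0 0 (- M) M rho rx rt rxx rxt u ux ut uxx 0);
      auto using Drect_iff; try lra.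
    intros s Hs. destruct (Hbd s ltac:(lra)) as [E1 E2]. rewrite E1, E2. unfold energy_flux. right. field. lra.
  - rewrite Rmult_0_l, Rplus_0_r. apply int_initial_bound; [apply Rmult_le_pos; lra| |].
    + apply (int_ex_RInt (fun x t => energy_dens g 0 0 (rho x t) (u x t))); try lra.
      intros; cbv beta; unfold energy_dens, potential; solve_cont2d.
    + intros x Hx. apply int_initial_densities; auto.
Qed.

Lemma int_bd_bound t : 0 <= t <= T ->
  RInt (fun x => bd_dens g al 0 0 (rho x t) (rx x t) (u x t)) (- M) M
    <= (1 + / (al - / 2) ^ 2) * (1 + / (g - 1)) * Rabs E0.
Proof.
  intros Ht. assert (Hab : - M < M) by lra.
  assert (Hic0 := Rinv_0_lt_compat _ (sq_half_pos al ltac:(lra))).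
  assert (Hig : 0 < / (g - 1)) by (apply Rinv_0_lt_compat; lra).
  eapply Rle_trans.
  - apply (bd_inequality (Drect M T) (fun x => - M <= x <= M) T g al 0 0 (- M) M rho rx rt rxx rxt u ux ut uxx 0);
      auto using Drect_iff; try lra.
    intros s Hs. destruct (Hbd s ltac:(lra)) as [E1 E2]. rewrite E1, E2. unfold bd_flux. right. field. lra.
  - rewrite Rmult_0_l, Rplus_0_r. apply int_initial_bound; [apply Rmult_le_pos; lra| |].
    + apply (int_ex_RInt (fun x t => bd_dens g al 0 0 (rho x t) (rx x t) (u x t))); try lra.
      intros; cbv beta; unfold bd_dens, bd_vel, potential; solve_cont2d.
    + intros x Hx. apply int_initial_densities; auto.
Qed.

(* The same bounds, by int_B1, on every subinterval (the densities being nonnegative). *)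
Lemma int_energy_bounds_sub t c d : 0 <= t <= T -> - M <= c -> c <= d -> d <= M ->
  RInt (fun x => energy_dens g 0 0 (rho x t) (u x t)) c d <= int_B1 g al E0 /\
  RInt (fun x => bd_dens g al 0 0 (rho x t) (rx x t) (u x t)) c d <= int_B1 g al E0.
Proof.
  intros Ht H1 H2 H3.
  assert (HB : (1 + / (al - / 2) ^ 2) * (1 + / (g - 1)) * Rabs E0 <= int_B1 g al E0) by (unfold int_B1; lra).
  split.
  - eapply Rle_trans; [|eapply Rle_trans; [apply (int_energy_bound t Ht)| exact HB]].
    apply RInt_subinterval_le; auto.
    + apply (int_ex_RInt (fun x t => energy_dens g 0 0 (rho x t) (u x t))); auto; try lra.
      intros; cbv beta; unfold energy_dens, potential; solve_cont2d.
    + intros s Hs. apply energy_dens_nonneg; [apply int_pos| apply potential_00_nonneg]; auto; lra.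
  - eapply Rle_trans; [|eapply Rle_trans; [apply (int_bd_bound t Ht)| exact HB]].
    apply RInt_subinterval_le; auto.
    + apply (int_ex_RInt (fun x t => bd_dens g al 0 0 (rho x t) (rx x t) (u x t))); auto; try lra.
      intros; cbv beta; unfold bd_dens, bd_vel, potential; solve_cont2d.
    + intros s Hs. apply bd_dens_nonneg; [apply int_pos| apply potential_00_nonneg]; auto; lra.
Qed.

(* Conservation of mass: u(+-M) = 0 makes the mass flux vanish at the ends. *)
Lemma int_mass_conserved t : 0 <= t <= T -> RInt (fun x => rho x t) (- M) M = m0.
Proof.
  intros Ht. assert (Hab : - M < M) by lra.
  assert (Hexr : forall s, 0 <= s <= T -> ex_RInt (fun x => rho x s) (- M) M).
  { intros s Hs. apply (int_ex_RInt (fun x t => rho x t)); auto; lra. }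
  assert (Hm0' : RInt (fun x => rho x 0) (- M) M = m0).
  { destruct Hm0 as [pr Hpr]. rewrite <- Hpr. apply RInt_Reals. }
  assert (F : forall sg s, 0 < s < T -> sg * (rho (- M) s * u (- M) s) - sg * (rho M s * u M s) <= 0).
  { intros sg s Hs. destruct (Hbd s ltac:(lra)) as [E1 E2]. rewrite E1, E2. lra. }
  assert (M1 := mass_inequality (Drect M T) (fun x => - M <= x <= M) T g al (- M) M rho rx rt rxx rxt u ux ut uxx 1 0
       (Drect_iff M T) Hab HT HX HG Cr Crx Crt Cu Cux (F 1) t Ht).
  assert (M2 := mass_inequality (Drect M T) (fun x => - M <= x <= M) T g al (- M) M rho rx rt rxx rxt u ux ut uxx (-1) 0
       (Drect_iff M T) Hab HT HX HG Cr Crx Crt Cu Cux (F (-1)) t Ht).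
  assert (E : forall sg s, 0 <= s <= T -> RInt (fun x => sg * rho x s) (- M) M = sg * RInt (fun x => rho x s) (- M) M).
  { intros sg s Hs. apply (@RInt_scal R_CompleteNormedModule). apply Hexr; auto. }
  rewrite !E in M1, M2 by lra. lra.
Qed.

Lemma int_mean_point t : 0 <= t <= T ->
  0 < m0 /\ exists ys, - M <= ys <= M /\ m0 / (2 * M) <= rho ys t.
Proof.
  intros Ht. assert (Hab : - M < M) by lra.
  assert (C1 := cont_on_clamped _ _ _ (Drect_iff M T) rho _ _ Hab HT HX Cr).
  assert (Hexr : forall s, 0 <= s <= T -> ex_RInt (fun x => rho x s) (- M) M).
  { intros s Hs. apply (int_ex_RInt (fun x t => rho x t)); auto; lra. }
  split.
  - destruct (extrema_interval (fun y => rho y 0) (- M) M ltac:(lra) (c2d_cont_ab rho (- M) M T 0 ltac:(lra) ltac:(lra) C1))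
      as [[mn [Hmn1 Hmn2]] _].
    rewrite <- (int_mass_conserved 0) by lra.
    eapply Rlt_le_trans; [|apply (RInt_ge_const (fun x => rho x 0) (- M) M (rho mn 0)); try lra].
    + assert (0 < rho mn 0) by (apply int_pos; lra). nra.
    + apply Hexr; lra.
    + intros; apply Hmn2; lra.
  - destruct (extrema_interval (fun y => rho y t) (- M) M ltac:(lra) (c2d_cont_ab rho (- M) M T t ltac:(lra) Ht C1))
      as [_ [ys [Hys1 Hys2]]].
    exists ys. split; auto. rewrite <- (int_mass_conserved t Ht).
    assert (Hle : RInt (fun x => rho x t) (- M) M <= rho ys t * (M - - M)).
    { apply RInt_le_bound; [lra| apply Hexr; lra| intros; apply Hys2; lra]. }
    apply Rle_trans with (rho ys t * (M - - M) / (2 * M)).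
    + unfold Rdiv. apply Rmult_le_compat_r; [left; apply Rinv_0_lt_compat; lra| exact Hle].
    + right. field. lra.
Qed.

Lemma int_holder t : 0 <= t <= T -> forall x y, - M <= x <= M -> - M <= y <= M ->
  (Rpower (rho y t) (al - / 2) - Rpower (rho x t) (al - / 2)) ^ 2 <= Rabs (y - x) * (2 * int_B1 g al E0).
Proof.
  intros Ht x y Hx Hy.
  apply (z_holder (Drect M T) (fun x => - M <= x <= M) T g al 0 0 (- M) M
           rho rx rt rxx rxt u ux ut uxx t (int_B1 g al E0) (Drect_iff M T)); auto; try lra.
  - intros; apply potential_00_nonneg; auto.
  - intros c d H1 H2 H3. apply int_energy_bounds_sub; auto.
Qed.

Lemma int_potential_bound t : 0 <= t <= T -> forall c d m, - M <= c -> c <= d -> d <= M ->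
  (forall y, c < y < d -> m <= Rpower (rho y t) g / (g - 1)) -> m * (d - c) <= int_B1 g al E0.
Proof.
  intros Ht c d m H1 Hcd H2 Hm.
  apply (RInt_mean_bound (fun y => potential g 0 0 (rho y t)) (fun y => energy_dens g 0 0 (rho y t) (u y t))); auto.
  - apply (int_ex_RInt (fun x t => potential g 0 0 (rho x t))); auto.
    intros; cbv beta; unfold potential; solve_cont2d.
  - apply (int_ex_RInt (fun x t => energy_dens g 0 0 (rho x t) (u x t))); auto.
    intros; cbv beta; unfold energy_dens, potential; solve_cont2d.
  - intros y Hy. apply potential_le_energy_dens, int_pos; lra.
  - apply (int_energy_bounds_sub t c d); auto.
  - intros y Hy. rewrite potential_00; auto.
Qed.

(* A lower bound m rho <= G(rho) on (-M, M) gives m m0 <= int_B1, by mass conservation. *)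
Lemma int_mass_potential_bound t : 0 <= t <= T -> forall m,
  (forall y, - M < y < M -> m * rho y t <= Rpower (rho y t) g / (g - 1)) -> m * m0 <= int_B1 g al E0.
Proof.
  intros Ht m Hm.
  assert (Hexr : ex_RInt (fun x => rho x t) (- M) M) by (apply (int_ex_RInt (fun x t => rho x t)); auto; lra).
  rewrite <- (int_mass_conserved t Ht).
  rewrite <- (@RInt_scal R_CompleteNormedModule) by exact Hexr.
  apply Rle_trans with (RInt (fun x => energy_dens g 0 0 (rho x t) (u x t)) (- M) M).
  - apply RInt_le; [lra| apply (@ex_RInt_scal R_NormedModule); exact Hexr| |].
    + apply (int_ex_RInt (fun x t => energy_dens g 0 0 (rho x t) (u x t))); auto; try lra.
      intros; cbv beta; unfold energy_dens, potential; solve_cont2d.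
    + intros y Hy. eapply Rle_trans; [|apply potential_le_energy_dens, int_pos; lra].
      rewrite potential_00 by auto. apply Hm; auto.
  - apply (int_energy_bounds_sub t (- M) M); auto; lra.
Qed.

End Interval.

Definition int_upper g al e m :=
  Rmax (Rpower 2 (/ (/ 2 - al)) * Rpower ((g - 1) * int_B1 g al e / m) (/ (g - 1)))
       (rho_cap g (/ 2 - al) (int_B1 g al e) (2 * int_B1 g al e)).

Definition int_lower g al M e m :=
  Rpower (Rpower (m / (2 * M)) (- (/ 2 - al)) + sqrt (2 * M * (2 * int_B1 g al e))) (- / (/ 2 - al)).

Lemma interval_density_bounds g al M T rho u q E0 m0 :
  1 < g -> 0 < al < / 2 -> 0 < M -> 0 < T ->
  is_solution (Drect M T) g al rho u ->
  smooth_on (Drect M T) noP rho -> smooth_on (Drect M T) noP u ->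
  (forall t, 0 <= t <= T -> u (- M) t = 0 /\ u M t = 0) ->
  (forall x t, Drect M T x t -> pdx (Drect M T) (fun y s => Rpower (rho y s) (al - / 2)) x t (q x t)) ->
  has_int (fun x => rho x 0 * u x 0 ^ 2 + q x 0 ^ 2 + Rpower (rho x 0) g) (- M) M E0 ->
  has_int (fun x => rho x 0) (- M) M m0 ->
  forall x t, Drect M T x t -> int_lower g al M E0 m0 <= rho x t <= int_upper g al E0 m0.
Proof.
  intros Hg Hal HM HT Hsol Hsr Hsu Hbd Hq HE0 Hm0 x t [Hx Ht].
  destruct (regular_solution_of_smooth (Drect M T) (fun x => - M <= x <= M) T g al rho u rho 0 noP noP
              (Drect_iff M T) HT (fun x t => eq_sym (Rminus_0_r (rho x t))) Hsol Hsr Hsu)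
    as [rx [rt [rxx [rxt [ux [ut [uxx [HG [Cr [Crx [Crt [Crxx [Crxt [Cu [Cux [Cut [Cuxx _]]]]]]]]]]]]]]]]].
  set (be := / 2 - al). set (B1 := int_B1 g al E0).
  assert (Hbe : 0 < be) by (unfold be; lra).
  assert (HB1 : 0 < B1).
  { unfold B1, int_B1. assert (0 <= Rabs E0) by apply Rabs_pos.
    assert (0 < / (al - / 2) ^ 2) by (apply Rinv_0_lt_compat, sq_half_pos; lra).
    assert (0 < / (g - 1)) by (apply Rinv_0_lt_compat; lra).
    assert (0 <= (1 + / (al - / 2) ^ 2) * (1 + / (g - 1))) by (apply Rmult_le_pos; lra). nra. }
  assert (HZ := int_holder g al M T E0 rho u q rx rt rxx rxt ux ut uxx
     Hg Hal HM HT HG Cr Crx Crt Crxx Crxt Cu Cux Cut Cuxx Hbd Hq HE0 t Ht).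
  assert (HGi := int_potential_bound g al M T E0 rho u q rx rt rxx rxt ux ut uxx
     Hg Hal HM HT HG Cr Crx Crt Crxx Crxt Cu Cux Cut Cuxx Hbd Hq HE0 t Ht).
  assert (HGM := int_mass_potential_bound g al M T E0 m0 rho u q rx rt rxx rxt ux ut uxx
     Hg Hal HM HT HG Cr Crx Crt Crxx Crxt Cu Cux Cut Cuxx Hbd Hq HE0 Hm0 t Ht).
  replace (al - / 2) with (- be) in HZ by (unfold be; ring). fold B1 in HZ, HGi, HGM.
  destruct (int_mean_point g al M T m0 rho u rx rt rxx rxt ux ut uxx HM HT HG Cr Crx Crt Cu Cux Hbd Hm0 t Ht)
    as [Hm0p [ys [Hys1 Hys2]]].
  assert (Hpos : forall y, - M <= y <= M -> 0 < rho y t) by (intros; apply (rs_pos HG); auto).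
  split.
  - apply (lower_bound_interval (fun y => rho y t) be (2 * B1) M m0 x ys); auto; lra.
  - apply (upper_bound_interval (fun y => rho y t) be g B1 (2 * B1) M m0 x); auto; unfold be; lra.
Qed.

Lemma lemma3p2_interval gamma alpha : 1 < gamma -> 0 < alpha < / 2 ->
  (exists (C : R -> R -> R) (CM : R -> R -> R -> R),
     (forall M E0 m0, 0 < M -> 0 < CM M E0 m0) /\
     forall (M T : R) (rho u q : R -> R -> R) (E0 m0 : R),
       0 < M -> 0 < T ->
       is_solution (Drect M T) gamma alpha rho u ->
       smooth_on (Drect M T) noP rho ->
       smooth_on (Drect M T) noP u ->
       (forall t, 0 <= t <= T -> u (- M) t = 0 /\ u M t = 0) ->
       (forall x t, Drect M T x t ->
          pdx (Drect M T) (fun y s => Rpower (rho y s) (alpha - / 2)) x t (q x t)) ->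
       has_int (fun x => rho x 0 * (u x 0)^2 + (q x 0)^2
                         + Rpower (rho x 0) gamma) (- M) M E0 ->
       has_int (fun x => rho x 0) (- M) M m0 ->
       forall x t, Drect M T x t -> CM M E0 m0 <= rho x t <= C E0 m0).
Proof.
  intros Hg Hal.
  exists (int_upper gamma alpha), (int_lower gamma alpha). split.
  - intros; apply rp_pos.
  - intros M T rho u q E0 m0 HM HT Hsol Hsr Hsu Hbd Hq HE0 Hm0.
    apply (interval_density_bounds gamma alpha M T rho u q E0 m0); auto.
Qed.

Theorem lemma3p2 (gamma alpha : R) (Hgamma : 1 < gamma)
  (Halpha : 0 < alpha < / 2) :
  (* (a) rhobar > 0, whole line *)
  (forall rhobar : R, 0 < rhobar ->
   exists Ct C : R -> R,
     (forall e, 0 < Ct e /\ Ct e <= C e) /\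
     forall (T : R) (rho u q : R -> R -> R) (E0 : R),
       0 < T ->
       is_solution (Dstrip T) gamma alpha rho u ->
       smooth_on (Dstrip T) (decay0 T) (fun x t => rho x t - rhobar) ->
       smooth_on (Dstrip T) (decay0 T) u ->
       (forall x t, Dstrip T x t ->
          pdx (Dstrip T) (fun y s => Rpower (rho y s) (alpha - / 2)) x t (q x t)) ->
       has_int_R (fun x => rho x 0 * (u x 0)^2 + (q x 0)^2
                           + rhoPsi gamma rhobar (rho x 0)) E0 ->
       forall x t, Dstrip T x t -> Ct E0 <= rho x t <= C E0)
  /\
  (* (b) rhobar = 0, bounded interval with u(+-M,t) = 0 *)
  (exists (C : R -> R -> R) (CM : R -> R -> R -> R),
     (forall M E0 m0, 0 < M -> 0 < CM M E0 m0) /\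
     forall (M T : R) (rho u q : R -> R -> R) (E0 m0 : R),
       0 < M -> 0 < T ->
       is_solution (Drect M T) gamma alpha rho u ->
       smooth_on (Drect M T) noP rho ->
       smooth_on (Drect M T) noP u ->
       (forall t, 0 <= t <= T -> u (- M) t = 0 /\ u M t = 0) ->
       (forall x t, Drect M T x t ->
          pdx (Drect M T) (fun y s => Rpower (rho y s) (alpha - / 2)) x t (q x t)) ->
       has_int (fun x => rho x 0 * (u x 0)^2 + (q x 0)^2
                         + Rpower (rho x 0) gamma) (- M) M E0 ->
       has_int (fun x => rho x 0) (- M) M m0 ->
       forall x t, Drect M T x t -> CM M E0 m0 <= rho x t <= C E0 m0).
Proof.
  split.
  - apply lemma3p2_line; auto.
  - apply lemma3p2_interval; auto.
Qed.
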